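(* Let $s>1/2$. For $\tau\in\mathbb R$ let $\mathcal H_1(\tau)e_n=e^{-in^3\tau}e_n$, $n\in\mathbb Z$, and for $w\in H^s$ set $$\widetilde H(\tau,w):=\mathcal H_1(-\tau)\big(\mathcal H_1(\tau)w\cdot\partial_x\mathcal H_1(\tau)w\big).$$ Then $\widetilde H(\tau,\cdot)$ is well defined and smooth from $H^s$ to $H^{s-1}$ with $\|\widetilde H(\tau,w)\|_{H^{s-1}}\le C_s\|w\|_{H^s}^2$, $C_s$ independent of $\tau$. Moreover, $\widetilde H$ is $2\pi$-periodic in $\tau$ and its time average is $$K(w):=\frac1{2\pi}\int_0^{2\pi}\widetilde H(\tau,w)\,d\tau=w_0\,\partial_x w+ie_0\sum_{n\in\mathbb Z}nw_nw_{-n}=w_0\sum_{n\in\mathbb Z}inw_ne_n+\Big(\sum_{n\in\mathbb Z}inw_nw_{-n}\Big)e_0,$$ where $w_0=\frac1{2\pi}\int_{-\pi}^{\pi}w(x)\,dx$.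
   Context: $e_n(x)=e^{inx}$; $w=\sum_n w_ne_n$; $H^s$ is the space of complex-valued $2\pi$-periodic functions with $\|w\|_{H^s}^2=\sum_n(|n|^2+1)^s|w_n|^2<\infty$. *)

From Stdlib Require Import Reals ZArith.
From Coquelicot Require Import Coquelicot.
Open Scope R_scope.

(* A 2pi-periodic complex function w = sum_n w_n e_n is represented by its
   Fourier coefficient sequence n |-> w_n. *)
Definition seqZ := Z -> C.

Definition zpsum {G : AbelianGroup} (f : Z -> G) (N : nat) : G :=
  sum_n (fun j : nat => f (Z.of_nat j - Z.of_nat N)%Z) (2 * N).

Definition is_zsumC (f : Z -> C) (l : C) : Prop :=
  filterlim (zpsum f) eventually (locally l).

Definition zsumC (f : Z -> C) : C :=
  @lim C_CompleteNormedModule (filtermap (zpsum f) eventually).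

Definition Hs_wt (s : R) (w : seqZ) (k : Z) : R :=
  Rpower (IZR k ^ 2 + 1) s * (Cmod (w k)) ^ 2.
Definition in_H (s : R) (w : seqZ) : Prop :=
  ex_finite_lim_seq (zpsum (G := R_AbelianGroup) (Hs_wt s w)).
Definition Hnorm (s : R) (w : seqZ) : R :=
  sqrt (real (Lim_seq (zpsum (G := R_AbelianGroup) (Hs_wt s w)))).

Definition sadd (u v : seqZ) : seqZ := fun n => Cplus (u n) (v n).
Definition ssub (u v : seqZ) : seqZ := fun n => Cminus (u n) (v n).
Definition sscal (a : R) (u : seqZ) : seqZ := fun n => Cmult (RtoC a) (u n).

Definition cexpi (t : R) : C := (cos t, sin t).

Definition H1 (tau : R) (w : seqZ) : seqZ :=
  fun n => Cmult (cexpi (- (IZR n ^ 3) * tau)) (w n).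

Definition dx (w : seqZ) : seqZ := fun n => Cmult (Cmult Ci (RtoC (IZR n))) (w n).

(* product of two functions = convolution of coefficients:
   (u v)_n = sum_k u_k v_{n-k}. *)
Definition conv_at (u v : seqZ) (n : Z) : Z -> C := fun k => Cmult (u k) (v (n - k)%Z).
Definition conv (u v : seqZ) : seqZ := fun n => zsumC (conv_at u v n).

Definition Htilde (tau : R) (w : seqZ) : seqZ :=
  H1 (- tau) (conv (H1 tau w) (dx (H1 tau w))).

Fixpoint prodR (k : nat) (g : nat -> R) : R :=
  match k with O => 1 | S k' => prodR k' g * g k' end.
Definition upd (v : nat -> seqZ) (i : nat) (x : seqZ) : nat -> seqZ :=
  fun j => if Nat.eqb j i then x else v j.
Definition scons (h : seqZ) (v : nat -> seqZ) : nat -> seqZ :=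
  fun j => match j with O => h | S j' => v j' end.

(* f is smooth from H^s to H^t: there are maps D k w (k-th derivative at w,
   a bounded real k-linear map (H^s)^k -> H^t, applied to the first k entries
   of v) with D 0 = f, such that each D k is Frechet differentiable (in the
   operator norm of bounded k-linear maps) with derivative D (k+1). *)
Definition smooth_map (s t : R) (f : seqZ -> seqZ) : Prop :=
  exists D : nat -> seqZ -> (nat -> seqZ) -> seqZ,
    (forall w v, in_H s w -> D O w v = f w) /\
    forall (k : nat) (w : seqZ), in_H s w ->
      (forall v v', (forall i, (i < k)%nat -> v i = v' i) -> D k w v = D k w v') /\
      (forall v i (a b : R) x y, (i < k)%nat ->
         (forall j, (j < k)%nat -> in_H s (v j)) -> in_H s x -> in_H s y ->
         D k w (upd v i (sadd (sscal a x) (sscal b y)))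
         = sadd (sscal a (D k w (upd v i x))) (sscal b (D k w (upd v i y)))) /\
      (exists M : R, forall v, (forall j, (j < k)%nat -> in_H s (v j)) ->
         in_H t (D k w v) /\
         Hnorm t (D k w v) <= M * prodR k (fun j => Hnorm s (v j))) /\
      (forall eps : R, 0 < eps -> exists delta : R, 0 < delta /\
         forall h, in_H s h -> Hnorm s h < delta ->
         forall v, (forall j, (j < k)%nat -> in_H s (v j)) ->
         Hnorm t (ssub (ssub (D k (sadd w h) v) (D k w v)) (D (S k) w (scons h v)))
         <= eps * Hnorm s h * prodR k (fun j => Hnorm s (v j))).

From Stdlib Require Import Reals ZArith Lra Lia FunctionalExtensionality.
From Coquelicot Require Import Coquelicot.
Open Scope R_scope.

(* Symmetrising [k <-> n - k] in the convolution turns [u * dx u] into [dx (u * u) / 2]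
   (with [u = H_1(tau) w]), so [Htilde(tau, .)] is the diagonal [B(w, w)] of a bilinear map
   composed of the isometries [H_1(+-tau)], the product [H^s x H^s -> H^s] and
   [dx : H^s -> H^(s-1)].  For [s > 1/2], [H^s] is an algebra: Peetre's inequality moves the
   weight [<n>^s] onto one factor, and Young's inequality concludes since [sum_k <k>^(-2s)] is
   finite.  A bounded quadratic map is smooth, with derivatives [B(w,h) + B(h,w)],
   [B(h1,h2) + B(h2,h1)] and then [0].
   In Fourier variables [Htilde(tau, w)_n = (i n / 2) sum_k e^(3 i n k (n-k) tau) w_k w_(n-k)],
   a uniformly convergent [2 pi]-periodic trigonometric series; averaging it term by term keeps
   only the resonant terms [k = 0] and [k = n], that is [i n w_0 w_n], while the mode [n = 0]
   vanishes identically.  Finally [sum_m i m w_m w_(-m) = 0] since the summand is odd in [m]. *)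

Fixpoint wsum {G : AbelianGroup} (f : Z -> G) (a : Z) (m : nat) : G :=
  match m with O => zero | S m' => plus (f a) (wsum f (Z.succ a) m') end.

Section WindowSums.
Context {G : AbelianGroup}.

Lemma wsum_snoc (f : Z -> G) m : forall a,
  wsum f a (S m) = plus (wsum f a m) (f (a + Z.of_nat m)%Z).
Proof.
  induction m as [|m IH]; intros a.
  - simpl. rewrite plus_zero_r, plus_zero_l, Z.add_0_r. reflexivity.
  - change (wsum f a (S (S m))) with (plus (f a) (wsum f (Z.succ a) (S m))).
    rewrite IH, plus_assoc. simpl.
    replace (Z.succ a + Z.of_nat m)%Z with (a + Z.of_nat (S m))%Z by lia. reflexivity.
Qed.

Lemma zpsum_wsum (f : Z -> G) N : zpsum f N = wsum f (- Z.of_nat N)%Z (S (2 * N)).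
Proof.
  unfold zpsum. generalize (2 * N)%nat as m. induction m as [|m IH].
  - rewrite sum_O. simpl. rewrite plus_zero_r. f_equal.
  - rewrite sum_Sn, IH, (wsum_snoc f (S m)).
    replace (- Z.of_nat N + Z.of_nat (S m))%Z with (Z.of_nat (S m) - Z.of_nat N)%Z by lia.
    reflexivity.
Qed.

Lemma wsum_app (f : Z -> G) m1 : forall a m2,
  wsum f a (m1 + m2) = plus (wsum f a m1) (wsum f (a + Z.of_nat m1)%Z m2).
Proof.
  induction m1 as [|m1 IH]; intros a m2; simpl.
  - rewrite plus_zero_l. f_equal. lia.
  - rewrite IH, plus_assoc. do 2 f_equal. lia.
Qed.

Lemma wsum_ext (f g : Z -> G) m : forall a,
  (forall k, (a <= k < a + Z.of_nat m)%Z -> f k = g k) -> wsum f a m = wsum g a m.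
Proof.
  induction m as [|m IH]; intros a H; simpl; auto.
  rewrite H by lia. f_equal. apply IH. intros k Hk. apply H. lia.
Qed.

Lemma wsum_shift (f : Z -> G) c m : forall a,
  wsum (fun k => f (k + c)%Z) a m = wsum f (a + c)%Z m.
Proof.
  induction m as [|m IH]; intros a; simpl; auto.
  rewrite IH. do 2 f_equal. lia.
Qed.

Lemma wsum_reflect (f : Z -> G) c m : forall a,
  wsum (fun k => f (c - k)%Z) a m = wsum f (c - a - Z.of_nat m + 1)%Z m.
Proof.
  induction m as [|m IH]; intros a; [reflexivity|].
  change (wsum (fun k => f (c - k)%Z) a (S m))
    with (plus (f (c - a)%Z) (wsum (fun k => f (c - k)%Z) (Z.succ a) m)).
  rewrite IH, wsum_snoc, plus_comm.
  replace (c - Z.succ a - Z.of_nat m + 1)%Z with (c - a - Z.of_nat (S m) + 1)%Z by lia.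
  replace (c - a - Z.of_nat (S m) + 1 + Z.of_nat m)%Z with (c - a)%Z by lia.
  reflexivity.
Qed.

Lemma wsum_plus (f g : Z -> G) m : forall a,
  wsum (fun k => plus (f k) (g k)) a m = plus (wsum f a m) (wsum g a m).
Proof.
  induction m as [|m IH]; intros a; simpl.
  - now rewrite plus_zero_l.
  - rewrite IH, <- !plus_assoc. f_equal.
    rewrite (plus_comm (g a)), <- plus_assoc. f_equal. apply plus_comm.
Qed.

Lemma wsum_opp (f : Z -> G) m : forall a,
  wsum (fun k => opp (f k)) a m = opp (wsum f a m).
Proof.
  induction m as [|m IH]; intros a; simpl.
  - symmetry. apply opp_zero.
  - rewrite IH, opp_plus. reflexivity.
Qed.

Lemma wsum_zero m : forall a, wsum (fun _ : Z => (zero : G)) a m = zero.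
Proof. induction m as [|m IH]; intros a; simpl; auto. rewrite IH. apply plus_zero_l. Qed.

Lemma wsum_comm (F : Z -> Z -> G) m l : forall a c,
  wsum (fun n => wsum (F n) c l) a m = wsum (fun k => wsum (fun n => F n k) a m) c l.
Proof.
  induction m as [|m IH]; intros a c; simpl.
  - symmetry. apply wsum_zero.
  - rewrite IH, <- wsum_plus. reflexivity.
Qed.

End WindowSums.

Definition wsumR (f : Z -> R) a m : R := @wsum R_AbelianGroup f a m.
Definition wsumC (f : Z -> C) a m : C := @wsum C_AbelianGroup f a m.

Lemma wsumR_S f a m : wsumR f a (S m) = f a + wsumR f (Z.succ a) m.
Proof. reflexivity. Qed.

Lemma wsumR_O f a : wsumR f a O = 0.
Proof. reflexivity. Qed.

Lemma wsumR_le (f g : Z -> R) m : forall a,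
  (forall k, (a <= k < a + Z.of_nat m)%Z -> f k <= g k) -> wsumR f a m <= wsumR g a m.
Proof.
  induction m as [|m IH]; intros a H; [rewrite !wsumR_O; lra|].
  rewrite !wsumR_S.
  assert (f a <= g a) by (apply H; lia).
  assert (wsumR f (Z.succ a) m <= wsumR g (Z.succ a) m) by (apply IH; intros; apply H; lia).
  lra.
Qed.

Lemma wsumR_nonneg (f : Z -> R) m a : (forall k, 0 <= f k) -> 0 <= wsumR f a m.
Proof.
  intros H. revert a; induction m; intros a; [rewrite wsumR_O; lra|].
  rewrite wsumR_S. specialize (IHm (Z.succ a)). specialize (H a). lra.
Qed.

Lemma wsumR_plus f g a m : wsumR (fun k => f k + g k) a m = wsumR f a m + wsumR g a m.
Proof. apply (wsum_plus (G := R_AbelianGroup)). Qed.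

Lemma wsumR_scal c f m : forall a, wsumR (fun k => c * f k) a m = c * wsumR f a m.
Proof.
  induction m as [|m IH]; intros a; [rewrite !wsumR_O; lra|]. rewrite !wsumR_S, IH. lra.
Qed.

Lemma wsumR_app f a m1 m2 : wsumR f a (m1 + m2) = wsumR f a m1 + wsumR f (a + Z.of_nat m1)%Z m2.
Proof. apply (wsum_app (G := R_AbelianGroup)). Qed.

Lemma wsumR_comm (F : Z -> Z -> R) m l a c :
  wsumR (fun n => wsumR (F n) c l) a m = wsumR (fun k => wsumR (fun n => F n k) a m) c l.
Proof. apply (wsum_comm (G := R_AbelianGroup)). Qed.

Lemma wsumR_ext f g m a :
  (forall k, (a <= k < a + Z.of_nat m)%Z -> f k = g k) -> wsumR f a m = wsumR g a m.
Proof. apply (wsum_ext (G := R_AbelianGroup)). Qed.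

Lemma wsumR_scal_r c f a m : wsumR (fun k => f k * c) a m = wsumR f a m * c.
Proof.
  rewrite Rmult_comm, <- wsumR_scal. apply wsumR_ext. intros; ring.
Qed.

Lemma wsumR_shift f c m a : wsumR (fun k => f (k + c)%Z) a m = wsumR f (a + c)%Z m.
Proof. apply (wsum_shift (G := R_AbelianGroup)). Qed.

Lemma wsumR_reflect (f : Z -> R) c a m :
  wsumR (fun k => f (c - k)%Z) a m = wsumR f (c - a - Z.of_nat m + 1)%Z m.
Proof. apply (wsum_reflect (G := R_AbelianGroup)). Qed.

Lemma wsumR_subwindow (f : Z -> R) a m c l : (forall k, 0 <= f k) ->
  (a <= c)%Z -> (c + Z.of_nat l <= a + Z.of_nat m)%Z -> wsumR f c l <= wsumR f a m.
Proof.
  intros Hf H1 H2.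
  assert (Hm : m = (Z.to_nat (c - a) + (l + Z.to_nat (a + Z.of_nat m - c - Z.of_nat l)))%nat)
    by lia.
  rewrite Hm, !wsumR_app.
  replace (a + Z.of_nat (Z.to_nat (c - a)))%Z with c by lia.
  pose proof (wsumR_nonneg f (Z.to_nat (c - a)) a Hf).
  pose proof (wsumR_nonneg f (Z.to_nat (a + Z.of_nat m - c - Z.of_nat l)) (c + Z.of_nat l) Hf).
  lra.
Qed.

Lemma quadratic_nonneg_discr (a b c : R) :
  0 <= a -> (forall t, 0 <= a * t * t + 2 * b * t + c) -> b * b <= a * c.
Proof.
  intros Ha H. destruct (Req_dec a 0) as [E|E].
  - subst. destruct (Req_dec b 0) as [Eb|Eb]; [subst; lra|].
    specialize (H (- (c + 1) / (2 * b))).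
    replace (0 * (- (c + 1) / (2 * b)) * (- (c + 1) / (2 * b))
             + 2 * b * (- (c + 1) / (2 * b)) + c) with (-1) in H by (field; auto).
    lra.
  - specialize (H (- b / a)).
    replace (a * (- b / a) * (- b / a) + 2 * b * (- b / a) + c)
      with ((a * c - b * b) / a) in H by (field; auto).
    assert (0 <= a * c - b * b).
    { apply Rmult_le_reg_r with (/ a). apply Rinv_0_lt_compat; lra. lra. }
    lra.
Qed.

Lemma Rmult_sqr_nonneg w x : 0 <= w -> 0 <= w * x * x.
Proof. intros H. rewrite Rmult_assoc. apply Rmult_le_pos; [exact H | apply Rle_0_sqr]. Qed.

Lemma wsumR_Cauchy_Schwarz (w p q : Z -> R) m a : (forall k, 0 <= w k) ->
  wsumR (fun k => w k * p k * q k) a m * wsumR (fun k => w k * p k * q k) a m <=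
  wsumR (fun k => w k * p k * p k) a m * wsumR (fun k => w k * q k * q k) a m.
Proof.
  intros Hw. apply quadratic_nonneg_discr.
  - apply wsumR_nonneg. intros k. apply Rmult_sqr_nonneg, Hw.
  - intros t.
    replace (wsumR (fun k => w k * p k * p k) a m * t * t
             + 2 * wsumR (fun k => w k * p k * q k) a m * t
             + wsumR (fun k => w k * q k * q k) a m)
      with (wsumR (fun k => w k * (p k * t + q k) * (p k * t + q k)) a m).
    + apply wsumR_nonneg. intros k. apply Rmult_sqr_nonneg, Hw.
    + transitivity (wsumR (fun k => t * t * (w k * p k * p k) + 2 * t * (w k * p k * q k)
                                    + w k * q k * q k) a m).
      * apply wsumR_ext. intros; ring.
      * rewrite !wsumR_plus, !wsumR_scal. ring.
Qed.

Lemma wsumR_Cauchy_Schwarz1 (w p : Z -> R) m a : (forall k, 0 <= w k) ->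
  wsumR (fun k => w k * p k) a m * wsumR (fun k => w k * p k) a m
  <= wsumR (fun k => w k * p k * p k) a m * wsumR w a m.
Proof.
  intros Hw. pose proof (wsumR_Cauchy_Schwarz w p (fun _ => 1) m a Hw) as H.
  replace (wsumR (fun k => w k * p k) a m) with (wsumR (fun k => w k * p k * 1) a m)
    by (apply wsumR_ext; intros; ring).
  replace (wsumR w a m) with (wsumR (fun k => w k * 1 * 1) a m)
    by (apply wsumR_ext; intros; ring).
  exact H.
Qed.

Lemma wsumC_S f a m : wsumC f a (S m) = Cplus (f a) (wsumC f (Z.succ a) m).
Proof. reflexivity. Qed.

Lemma wsumC_plus (f g : Z -> C) a m :
  wsumC (fun k => Cplus (f k) (g k)) a m = Cplus (wsumC f a m) (wsumC g a m).
Proof. apply (wsum_plus (G := C_AbelianGroup)). Qed.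

Lemma wsumC_ext (f g : Z -> C) a m : (forall k, f k = g k) -> wsumC f a m = wsumC g a m.
Proof. intros H. apply (wsum_ext (G := C_AbelianGroup)). auto. Qed.

Lemma wsumC_app f a m1 m2 :
  wsumC f a (m1 + m2) = Cplus (wsumC f a m1) (wsumC f (a + Z.of_nat m1)%Z m2).
Proof. apply (wsum_app (G := C_AbelianGroup)). Qed.

Lemma wsumC_scal_l (c : C) (f : Z -> C) m : forall a,
  Cmult c (wsumC f a m) = wsumC (fun k => Cmult c (f k)) a m.
Proof.
  induction m as [|m IH]; intros a.
  - apply injective_projections; simpl; ring.
  - rewrite !wsumC_S, <- IH. apply injective_projections; simpl; ring.
Qed.

Lemma wsumC_norm_le (f : Z -> C) (d : Z -> R) m :
  (forall k, Cmod (f k) <= d k) -> forall a, Cmod (wsumC f a m) <= wsumR d a m.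
Proof.
  intros H. induction m as [|m IH]; intros a.
  - unfold wsumC; simpl. rewrite wsumR_O. change (Cmod (RtoC 0) <= 0). rewrite Cmod_0. lra.
  - rewrite wsumC_S, wsumR_S. eapply Rle_trans; [apply Cmod_triangle|].
    specialize (IH (Z.succ a)). specialize (H a). lra.
Qed.

Lemma wsumC_subwindow_dist (f : Z -> C) (d : Z -> R) a m c l :
  (forall k, Cmod (f k) <= d k) ->
  (a <= c)%Z -> (c + Z.of_nat l <= a + Z.of_nat m)%Z ->
  Cmod (Cminus (wsumC f a m) (wsumC f c l)) <= wsumR d a m - wsumR d c l.
Proof.
  intros Hd H1 H2.
  assert (Hm : m = (Z.to_nat (c - a) + (l + Z.to_nat (a + Z.of_nat m - c - Z.of_nat l)))%nat)
    by lia.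
  rewrite Hm, !wsumC_app, !wsumR_app.
  replace (a + Z.of_nat (Z.to_nat (c - a)))%Z with c by lia.
  set (A := wsumC f a (Z.to_nat (c - a))).
  set (B := wsumC f (c + Z.of_nat l)%Z (Z.to_nat (a + Z.of_nat m - c - Z.of_nat l))).
  replace (Cminus (Cplus A (Cplus (wsumC f c l) B)) (wsumC f c l)) with (Cplus A B)
    by (apply injective_projections; simpl; ring).
  eapply Rle_trans; [apply Cmod_triangle|].
  pose proof (wsumC_norm_le f d (Z.to_nat (c - a)) Hd a).
  pose proof (wsumC_norm_le f d (Z.to_nat (a + Z.of_nat m - c - Z.of_nat l)) Hd (c + Z.of_nat l)).
  unfold A, B. lra.
Qed.

Lemma wsumC_single (p : Z) (f : Z -> C) a m : (a <= p < a + Z.of_nat m)%Z ->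
  (forall k, k <> p -> f k = RtoC 0) -> wsumC f a m = f p.
Proof.
  revert a. induction m as [|m IH]; intros a H Hf; [lia|].
  rewrite wsumC_S. destruct (Z.eq_dec a p) as [E|E].
  - subst. unfold wsumC.
    rewrite (wsum_ext (G := C_AbelianGroup) _ (fun _ => zero)), wsum_zero
      by (intros k Hk; apply Hf; lia).
    apply injective_projections; simpl; ring.
  - rewrite Hf, IH by (auto; lia). apply injective_projections; simpl; ring.
Qed.

Lemma wsumC_pair (f : Z -> C) p q a m : p <> q ->
  (a <= p < a + Z.of_nat m)%Z -> (a <= q < a + Z.of_nat m)%Z ->
  (forall k, k <> p -> k <> q -> f k = RtoC 0) -> wsumC f a m = Cplus (f p) (f q).
Proof.
  intros Hpq Hp Hq Hf.
  rewrite (wsumC_ext f (fun k => Cplus (if Z.eqb k p then f k else RtoC 0)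
                                       (if Z.eqb k q then f k else RtoC 0))).
  - rewrite wsumC_plus, (wsumC_single p), (wsumC_single q); auto;
      try (intros k Hk; apply Z.eqb_neq in Hk; rewrite Hk; reflexivity).
    rewrite !Z.eqb_refl. reflexivity.
  - intros k. destruct (Z.eqb_spec k p), (Z.eqb_spec k q); subst; try lia;
      try (apply injective_projections; simpl; ring).
    rewrite Hf by auto. apply injective_projections; simpl; ring.
Qed.

Notation zpsumR := (zpsum (G := R_AbelianGroup)).

Lemma zpsumR_wsumR f N : zpsumR f N = wsumR f (- Z.of_nat N)%Z (S (2 * N)).
Proof. apply (zpsum_wsum (G := R_AbelianGroup)). Qed.

Lemma zpsum_wsumC (f : Z -> C) N : zpsum f N = wsumC f (- Z.of_nat N)%Z (S (2 * N)).
Proof. apply (zpsum_wsum (G := C_AbelianGroup)). Qed.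

Lemma ball_Cmod_lt (x y : C) (eps : R) : ball x eps y -> Cmod (Cminus y x) < 2 * eps.
Proof.
  intros [H1 H2]. unfold ball in H1, H2; simpl in H1, H2. unfold AbsRing_ball in H1, H2.
  unfold abs, minus, plus, opp in H1, H2; simpl in H1, H2.
  pose proof (Cmod_2Rmax (Cminus y x)) as H.
  assert (Rmax (Rabs (fst (Cminus y x))) (Rabs (snd (Cminus y x))) < eps)
    by (apply Rmax_lub_lt; simpl; unfold Rminus; auto).
  assert (sqrt 2 < 2) by (rewrite <- (sqrt_square 2) at 2 by lra; apply sqrt_lt_1; lra).
  assert (0 <= Rmax (Rabs (fst (Cminus y x))) (Rabs (snd (Cminus y x))))
    by (eapply Rle_trans; [apply Rabs_pos | apply Rmax_l]).
  pose proof (sqrt_pos 2). nra.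
Qed.

Lemma Cmod_lt_ball (x y : C) (eps : R) : Cmod (Cminus y x) < eps -> ball x eps y.
Proof.
  intros H. pose proof (Rmax_Cmod (Cminus y x)) as H'.
  split; unfold ball; simpl; unfold AbsRing_ball, abs, minus, plus, opp; simpl;
    (apply Rle_lt_trans with (2 := H); eapply Rle_trans; [|exact H']);
    [apply Rmax_l | apply Rmax_r].
Qed.

Lemma is_zsumC_spec (f : Z -> C) l : is_zsumC f l <->
  forall eps, 0 < eps -> exists N0, forall N, (N0 <= N)%nat -> Cmod (Cminus (zpsum f N) l) < eps.
Proof.
  split.
  - intros H eps Heps.
    destruct (H (ball l (eps / 2))) as [N0 HN0].
    { exists (mkposreal _ (ltac:(lra) : 0 < eps / 2)). auto. }
    exists N0. intros N HN. specialize (HN0 N HN). apply ball_Cmod_lt in HN0. lra.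
  - intros H P [e He]. destruct (H e (cond_pos e)) as [N0 HN0].
    exists N0. intros N HN. apply He, Cmod_lt_ball, HN0, HN.
Qed.

Lemma is_zsumC_unique (f : Z -> C) l : is_zsumC f l -> zsumC f = l.
Proof.
  intros H. unfold zsumC.
  set (F := filtermap (zpsum f) eventually).
  assert (HF : ProperFilter F) by (apply filtermap_proper_filter, eventually_filter).
  assert (Hc : cauchy F) by (intros eps; exists l; apply H; exists eps; auto).
  pose proof (@complete_cauchy C_CompleteNormedModule F HF Hc) as Hlim.
  apply (filterlim_locally_unique (K := C_AbsRing) (F := eventually) (zpsum f)); [|exact H].
  intros P [e He]. apply (filter_imp _ _ (fun _ Hx => He _ Hx) (Hlim e)).
Qed.

Lemma zpsum_Cplus (f g : Z -> C) N :
  zpsum (fun k => Cplus (f k) (g k)) N = Cplus (zpsum f N) (zpsum g N).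
Proof. unfold zpsum. apply (sum_n_plus (G := C_AbelianGroup)). Qed.

Lemma zpsum_Cmult_l (c : C) (f : Z -> C) N :
  zpsum (fun k => Cmult c (f k)) N = Cmult c (zpsum f N).
Proof. unfold zpsum. apply (sum_n_mult_l (K := C_Ring)). Qed.

Lemma is_zsumC_plus f g l1 l2 : is_zsumC f l1 -> is_zsumC g l2 ->
  is_zsumC (fun k => Cplus (f k) (g k)) (Cplus l1 l2).
Proof.
  intros H1 H2. apply is_zsumC_spec. intros eps Heps.
  destruct (proj1 (is_zsumC_spec _ _) H1 (eps / 2)) as [N1 HN1]; [lra|].
  destruct (proj1 (is_zsumC_spec _ _) H2 (eps / 2)) as [N2 HN2]; [lra|].
  exists (max N1 N2). intros N HN.
  specialize (HN1 N ltac:(lia)). specialize (HN2 N ltac:(lia)).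
  rewrite zpsum_Cplus.
  replace (Cminus (Cplus (zpsum f N) (zpsum g N)) (Cplus l1 l2))
    with (Cplus (Cminus (zpsum f N) l1) (Cminus (zpsum g N) l2))
    by (apply injective_projections; simpl; ring).
  eapply Rle_lt_trans; [apply Cmod_triangle | lra].
Qed.

Lemma is_zsumC_scal_l c f l : is_zsumC f l -> is_zsumC (fun k => Cmult c (f k)) (Cmult c l).
Proof.
  intros H. apply is_zsumC_spec. intros eps Heps.
  assert (Hc : 0 < Cmod c + 1) by (pose proof (Cmod_ge_0 c); lra).
  destruct (proj1 (is_zsumC_spec _ _) H (eps / (Cmod c + 1))) as [N1 HN1].
  { apply Rdiv_lt_0_compat; lra. }
  exists N1. intros N HN. specialize (HN1 N HN).
  rewrite zpsum_Cmult_l.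
  replace (Cminus (Cmult c (zpsum f N)) (Cmult c l)) with (Cmult c (Cminus (zpsum f N) l))
    by (apply injective_projections; simpl; ring).
  rewrite Cmod_mult. pose proof (Cmod_ge_0 c). pose proof (Cmod_ge_0 (Cminus (zpsum f N) l)).
  apply Rle_lt_trans with ((Cmod c + 1) * Cmod (Cminus (zpsum f N) l)); [nra|].
  apply Rmult_lt_reg_r with (/ (Cmod c + 1)); [apply Rinv_0_lt_compat; lra|].
  replace ((Cmod c + 1) * Cmod (Cminus (zpsum f N) l) * / (Cmod c + 1))
    with (Cmod (Cminus (zpsum f N) l)) by (field; lra).
  exact HN1.
Qed.

Lemma is_zsumC_odd (f : Z -> C) : (forall k, f (- k)%Z = Copp (f k)) -> is_zsumC f (RtoC 0).
Proof.
  intros Hf.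
  assert (Hz : forall N, zpsum f N = RtoC 0).
  { intros N. rewrite zpsum_wsumC. set (X := wsumC f (- Z.of_nat N) (S (2 * N))).
    assert (E : X = Copp X).
    { unfold X, wsumC. rewrite <- (wsum_opp (G := C_AbelianGroup)).
      transitivity (@wsum C_AbelianGroup (fun k => f (0 - k)%Z) (- Z.of_nat N) (S (2 * N))).
      - rewrite wsum_reflect. f_equal. lia.
      - apply wsum_ext. intros k _. rewrite Z.sub_0_l. apply Hf. }
    destruct X as [x1 x2]. unfold Copp in E. simpl in E. injection E; intros.
    apply injective_projections; simpl; lra. }
  apply is_zsumC_spec. intros eps Heps. exists O. intros N _. rewrite Hz.
  replace (Cminus (RtoC 0) (RtoC 0)) with (RtoC 0) by (apply injective_projections; simpl; ring).
  rewrite Cmod_0. exact Heps.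
Qed.

Definition zpsumR_bounded (f : Z -> R) (M : R) := forall N, zpsumR f N <= M.

Definition zsumR (f : Z -> R) : R := real (Lim_seq (zpsumR f)).

Section NonnegSeries.
Variable f : Z -> R.
Hypothesis f_nonneg : forall k, 0 <= f k.

Lemma zpsumR_incr N N' : (N <= N')%nat -> zpsumR f N <= zpsumR f N'.
Proof. intros H. rewrite !zpsumR_wsumR. apply wsumR_subwindow; auto; lia. Qed.

Variable M : R.
Hypothesis f_bounded : zpsumR_bounded f M.

Lemma is_lim_zsumR : is_lim_seq (zpsumR f) (zsumR f).
Proof.
  destruct (ex_finite_lim_seq_incr (zpsumR f) M) as [l Hl].
  - intros n. apply zpsumR_incr. lia.
  - exact f_bounded.
  - unfold zsumR. rewrite (is_lim_seq_unique _ _ Hl). exact Hl.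
Qed.

Lemma zpsumR_le_zsumR N : zpsumR f N <= zsumR f.
Proof.
  apply is_lim_seq_incr_compare; [apply is_lim_zsumR|]. intros n. apply zpsumR_incr. lia.
Qed.

Lemma wsumR_le_zsumR c l : wsumR f c l <= zsumR f.
Proof.
  eapply Rle_trans; [|apply (zpsumR_le_zsumR (Z.to_nat (Z.abs c) + l))].
  rewrite zpsumR_wsumR. apply wsumR_subwindow; auto; lia.
Qed.

Lemma zsumR_le : zsumR f <= M.
Proof.
  assert (H : Rbar_le (zsumR f) M)
    by apply (is_lim_seq_le _ _ _ _ f_bounded is_lim_zsumR (is_lim_seq_const M)).
  exact H.
Qed.

Lemma zsumR_nonneg : 0 <= zsumR f.
Proof.
  eapply Rle_trans; [|apply (zpsumR_le_zsumR 0)].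
  rewrite zpsumR_wsumR. apply wsumR_nonneg; auto.
Qed.

Lemma zsumR_tail eps : 0 < eps -> exists N0, forall N, (N0 <= N)%nat -> zsumR f - zpsumR f N < eps.
Proof.
  intros Heps. pose proof is_lim_zsumR as Hl.
  apply is_lim_seq_spec in Hl. destruct (Hl (mkposreal eps Heps)) as [N0 HN0].
  exists N0. intros N HN. specialize (HN0 N HN). simpl in HN0. apply Rabs_def2 in HN0. lra.
Qed.

End NonnegSeries.

Section DominatedSeries.
Variables (f : Z -> C) (d : Z -> R) (M : R).
Hypothesis f_dominated : forall k, Cmod (f k) <= d k.
Hypothesis d_bounded : zpsumR_bounded d M.

Let d_nonneg : forall k, 0 <= d k.
Proof. intros k. eapply Rle_trans; [apply Cmod_ge_0 | apply f_dominated]. Qed.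

Lemma zpsum_dominated_dist N N' : (N <= N')%nat ->
  Cmod (Cminus (zpsum f N') (zpsum f N)) <= zsumR d - zpsumR d N.
Proof.
  intros H. rewrite !zpsum_wsumC.
  eapply Rle_trans; [apply wsumC_subwindow_dist with (d := d); auto; lia|].
  rewrite <- !zpsumR_wsumR. pose proof (zpsumR_le_zsumR d d_nonneg M d_bounded N'). lra.
Qed.

Lemma is_zsumC_dominated : exists l, is_zsumC f l.
Proof.
  apply (proj1 (@filterlim_locally_cauchy nat C_CompleteNormedModule eventually _ (zpsum f))).
  intros eps.
  destruct (zsumR_tail d d_nonneg M d_bounded (eps / 2)) as [N0 HN0]; [destruct eps; simpl; lra|].
  exists (fun N => (N0 <= N)%nat). split; [exists N0; auto|].
  intros u v Hu Hv. apply Cmod_lt_ball.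
  pose proof (zpsum_dominated_dist N0 u Hu). pose proof (zpsum_dominated_dist N0 v Hv).
  specialize (HN0 N0 (le_n _)).
  replace (Cminus (zpsum f v) (zpsum f u)) with
    (Cplus (Cminus (zpsum f v) (zpsum f N0)) (Copp (Cminus (zpsum f u) (zpsum f N0))))
    by (apply injective_projections; simpl; ring).
  eapply Rle_lt_trans; [apply Cmod_triangle|]. rewrite Cmod_opp. lra.
Qed.

Variable l : C.
Hypothesis f_sum : is_zsumC f l.

Lemma zsumC_tail_le N : Cmod (Cminus l (zpsum f N)) <= zsumR d - zpsumR d N.
Proof.
  apply Rnot_lt_le. intros Hlt.
  set (g := Cmod (Cminus l (zpsum f N)) - (zsumR d - zpsumR d N)).
  destruct (proj1 (is_zsumC_spec f l) f_sum g ltac:(unfold g; lra)) as [N0 HN0].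
  set (N' := max N0 N). specialize (HN0 N' (Nat.le_max_l _ _)).
  pose proof (zpsum_dominated_dist N N' (Nat.le_max_r _ _)).
  assert (Cmod (Cminus l (zpsum f N)) <=
          Cmod (Cminus (zpsum f N') l) + Cmod (Cminus (zpsum f N') (zpsum f N))).
  { replace (Cminus l (zpsum f N))
      with (Cplus (Copp (Cminus (zpsum f N') l)) (Cminus (zpsum f N') (zpsum f N)))
      by (apply injective_projections; simpl; ring).
    eapply Rle_trans; [apply Cmod_triangle|]. rewrite Cmod_opp. lra. }
  unfold g in HN0. lra.
Qed.

Lemma is_zsumC_reflect n : is_zsumC (fun k => f (n - k)%Z) l.
Proof.
  apply is_zsumC_spec. intros eps Heps.
  destruct (zsumR_tail d d_nonneg M d_bounded (eps / 2)) as [N0 HN0]; [lra|].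
  exists (N0 + Z.to_nat (Z.abs n))%nat. intros N HN.
  rewrite zpsum_wsumC. unfold wsumC at 1. rewrite wsum_reflect.
  change (@wsum C_AbelianGroup f ?a ?m) with (wsumC f a m).
  set (a := (n - - Z.of_nat N - Z.of_nat (S (2 * N)) + 1)%Z).
  pose proof (zsumC_tail_le N0) as T. specialize (HN0 N0 (le_n _)).
  assert (H1 : Cmod (Cminus (wsumC f a (S (2 * N))) (zpsum f N0)) <= zsumR d - zpsumR d N0).
  { rewrite zpsum_wsumC.
    eapply Rle_trans; [apply wsumC_subwindow_dist with (d := d); auto; unfold a; lia|].
    rewrite <- zpsumR_wsumR. pose proof (wsumR_le_zsumR d d_nonneg M d_bounded a (S (2 * N))).
    lra. }
  replace (Cminus (wsumC f a (S (2 * N))) l)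
    with (Cplus (Cminus (wsumC f a (S (2 * N))) (zpsum f N0)) (Copp (Cminus l (zpsum f N0))))
    by (apply injective_projections; simpl; ring).
  eapply Rle_lt_trans; [apply Cmod_triangle|]. rewrite Cmod_opp. lra.
Qed.

End DominatedSeries.

Definition jbracket (s : R) (k : Z) : R := Rpower (IZR k ^ 2 + 1) s.

Lemma jbracket_base_ge_1 (k : Z) : 1 <= IZR k ^ 2 + 1.
Proof. pose proof (pow2_ge_0 (IZR k)). lra. Qed.

Lemma jbracket_pos s k : 0 < jbracket s k.
Proof. apply exp_pos. Qed.

Lemma jbracket_ge_1 s k : 0 <= s -> 1 <= jbracket s k.
Proof.
  intros Hs. unfold jbracket.
  rewrite <- (Rpower_O (IZR k ^ 2 + 1)) at 1 by (pose proof (jbracket_base_ge_1 k); lra).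
  apply Rle_Rpower; auto. apply jbracket_base_ge_1.
Qed.

Lemma jbracket_opp_mul s k : jbracket (- s) k * jbracket s k = 1.
Proof.
  unfold jbracket. rewrite <- Rpower_plus. replace (- s + s) with 0 by ring. apply Rpower_O.
  pose proof (jbracket_base_ge_1 k); lra.
Qed.

Lemma jbracket_half_sqr s k : jbracket (s / 2) k * jbracket (s / 2) k = jbracket s k.
Proof. unfold jbracket. rewrite <- Rpower_plus. f_equal. field. Qed.

Lemma jbracket_pred s n : jbracket s n = jbracket (s - 1) n * (IZR n ^ 2 + 1).
Proof.
  unfold jbracket. replace s with ((s - 1) + 1) at 1 by ring. rewrite Rpower_plus, Rpower_1; auto.
  pose proof (jbracket_base_ge_1 n); lra.
Qed.

Lemma jbracket_ge_sqrt s k : 1 / 2 <= s -> sqrt (IZR k ^ 2 + 1) <= jbracket s k.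
Proof.
  intros Hs. unfold jbracket.
  rewrite <- Rpower_sqrt by (pose proof (jbracket_base_ge_1 k); lra).
  apply Rle_Rpower; [apply jbracket_base_ge_1 | lra].
Qed.

(* Peetre's inequality: [<n>^s <= 2^s (<k>^s + <n-k>^s)], with [<k> := (k^2+1)^(1/2)]. *)
Lemma jbracket_half_split s n k : 0 <= s ->
  jbracket (s / 2) n <= Rpower 2 s * (jbracket (s / 2) k + jbracket (s / 2) (n - k)%Z).
Proof.
  intros Hs.
  assert (H4 : Rpower 4 (s / 2) = Rpower 2 s).
  { replace 4 with (2 * 2) by ring. rewrite <- Rpower_mult_distr by lra.
    rewrite <- Rpower_plus. f_equal. field. }
  assert (Hn : IZR n ^ 2 <= 2 * IZR k ^ 2 + 2 * IZR (n - k) ^ 2).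
  { rewrite minus_IZR.
    replace (2 * IZR k ^ 2 + 2 * (IZR n - IZR k) ^ 2) with (IZR n ^ 2 + (2 * IZR k - IZR n) ^ 2)
      by ring.
    pose proof (pow2_ge_0 (2 * IZR k - IZR n)). lra. }
  assert (Hle : forall j, IZR n ^ 2 + 1 <= 4 * (IZR j ^ 2 + 1) ->
                jbracket (s / 2) n <= Rpower 2 s * jbracket (s / 2) j).
  { intros j Hj. pose proof (jbracket_base_ge_1 j).
    unfold jbracket. rewrite <- H4, Rpower_mult_distr by lra.
    apply Rle_Rpower_l; [lra|]. pose proof (jbracket_base_ge_1 n). split; lra. }
  pose proof (jbracket_pos (s / 2) k). pose proof (jbracket_pos (s / 2) (n - k)).
  pose proof (exp_pos (s * ln 2)) as P2. change (exp (s * ln 2)) with (Rpower 2 s) in P2.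
  pose proof (pow2_ge_0 (IZR k)). pose proof (pow2_ge_0 (IZR (n - k))).
  destruct (Rle_dec (IZR k ^ 2) (IZR (n - k) ^ 2)).
  - assert (jbracket (s / 2) n <= Rpower 2 s * jbracket (s / 2) (n - k)) by (apply Hle; lra).
    nra.
  - assert (jbracket (s / 2) n <= Rpower 2 s * jbracket (s / 2) k) by (apply Hle; lra).
    nra.
Qed.

Lemma Hs_wt_nonneg s w k : 0 <= Hs_wt s w k.
Proof. apply Rmult_le_pos; [left; apply jbracket_pos | apply pow2_ge_0]. Qed.

Lemma Cmod_sqr_le_Hs_wt s w k : 0 <= s -> Cmod (w k) ^ 2 <= Hs_wt s w k.
Proof.
  intros Hs. pose proof (jbracket_ge_1 s k Hs). pose proof (pow2_ge_0 (Cmod (w k))).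
  change (Cmod (w k) ^ 2 <= jbracket s k * Cmod (w k) ^ 2). nra.
Qed.

Lemma Hnorm_nonneg s w : 0 <= Hnorm s w.
Proof. apply sqrt_pos. Qed.

Lemma in_H_bounded s w : in_H s w -> zpsumR_bounded (Hs_wt s w) (zsumR (Hs_wt s w)).
Proof.
  intros [l Hl] N. unfold zsumR. rewrite (is_lim_seq_unique _ _ Hl). simpl.
  apply is_lim_seq_incr_compare; auto. intros n. apply zpsumR_incr; [apply Hs_wt_nonneg | lia].
Qed.

Lemma Hnorm_sqr s w : in_H s w -> Hnorm s w ^ 2 = zsumR (Hs_wt s w).
Proof.
  intros H. unfold Hnorm. rewrite pow2_sqrt; [reflexivity|].
  apply (zsumR_nonneg _ (Hs_wt_nonneg s w) _ (in_H_bounded s w H)).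
Qed.

Lemma wsumR_Hs_wt_le s w c l : in_H s w -> wsumR (Hs_wt s w) c l <= Hnorm s w ^ 2.
Proof.
  intros H. rewrite Hnorm_sqr by exact H.
  apply (wsumR_le_zsumR _ (Hs_wt_nonneg s w) _ (in_H_bounded s w H)).
Qed.

Lemma in_H_of_bounded t x K : 0 <= K -> zpsumR_bounded (Hs_wt t x) (K * K) ->
  in_H t x /\ Hnorm t x <= K.
Proof.
  intros HK H. split.
  - apply ex_finite_lim_seq_incr with (K * K); auto.
    intros n. apply zpsumR_incr; [apply Hs_wt_nonneg | lia].
  - unfold Hnorm. rewrite <- (sqrt_square K) by auto. apply sqrt_le_1_alt.
    apply (zsumR_le _ (Hs_wt_nonneg t x) _ H).
Qed.

Lemma sqrt_le_of_sqr_le P X Y : 0 <= P -> 0 <= X -> 0 <= Y -> P * P <= X * Y ->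
  P <= sqrt X * sqrt Y.
Proof.
  intros HP HX HY H. rewrite <- sqrt_mult, <- (sqrt_square P) by auto. apply sqrt_le_1_alt, H.
Qed.

Lemma sqrt_wsumR_Hs_wt_le s w c l : in_H s w -> sqrt (wsumR (Hs_wt s w) c l) <= Hnorm s w.
Proof.
  intros H. rewrite <- (sqrt_pow2 (Hnorm s w)) by apply Hnorm_nonneg.
  apply sqrt_le_1_alt, wsumR_Hs_wt_le, H.
Qed.

Lemma in_H_plus t x y : in_H t x -> in_H t y ->
  in_H t (sadd x y) /\ Hnorm t (sadd x y) <= Hnorm t x + Hnorm t y.
Proof.
  intros Hx Hy. pose proof (Hnorm_nonneg t x). pose proof (Hnorm_nonneg t y).
  apply in_H_of_bounded; [lra|]. intros N. rewrite zpsumR_wsumR.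
  set (a := (- Z.of_nat N)%Z). set (m := S (2 * N)).
  set (X := wsumR (Hs_wt t x) a m). set (Y := wsumR (Hs_wt t y) a m).
  set (P := wsumR (fun k => jbracket t k * Cmod (x k) * Cmod (y k)) a m).
  assert (HP : P <= sqrt X * sqrt Y).
  { apply sqrt_le_of_sqr_le; try (apply wsumR_nonneg, Hs_wt_nonneg).
    - apply wsumR_nonneg. intros k. pose proof (jbracket_pos t k).
      pose proof (Cmod_ge_0 (x k)). pose proof (Cmod_ge_0 (y k)). apply Rmult_le_pos; nra.
    - eapply Rle_trans; [apply wsumR_Cauchy_Schwarz; intros k; left; apply jbracket_pos|].
      right. f_equal; apply wsumR_ext; intros; unfold Hs_wt, jbracket; ring. }
  assert (E : wsumR (Hs_wt t (sadd x y)) a m <= X + 2 * P + Y).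
  { unfold X, Y, P. rewrite <- wsumR_scal, <- !wsumR_plus. apply wsumR_le. intros k _.
    unfold sadd, Hs_wt. fold (jbracket t k).
    pose proof (Cmod_triangle (x k) (y k)). pose proof (Cmod_ge_0 (Cplus (x k) (y k))).
    pose proof (jbracket_pos t k).
    assert (Cmod (Cplus (x k) (y k)) ^ 2 <= (Cmod (x k) + Cmod (y k)) ^ 2)
      by (apply pow_incr; lra).
    apply Rle_trans with (jbracket t k * (Cmod (x k) + Cmod (y k)) ^ 2);
      [apply Rmult_le_compat_l; lra | right; ring]. }
  pose proof (sqrt_wsumR_Hs_wt_le t x a m Hx). pose proof (sqrt_wsumR_Hs_wt_le t y a m Hy).
  fold X Y in H1, H2.
  pose proof (sqrt_pos X). pose proof (sqrt_pos Y).
  rewrite <- (sqrt_sqrt X), <- (sqrt_sqrt Y) in E by (apply wsumR_nonneg, Hs_wt_nonneg).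
  nra.
Qed.

Lemma in_H_scal t a x : in_H t x -> in_H t (sscal a x) /\ Hnorm t (sscal a x) <= Rabs a * Hnorm t x.
Proof.
  intros Hx. apply in_H_of_bounded; [apply Rmult_le_pos; [apply Rabs_pos | apply Hnorm_nonneg]|].
  intros N. rewrite zpsumR_wsumR.
  transitivity (wsumR (fun k => Rabs a * Rabs a * Hs_wt t x k) (- Z.of_nat N)%Z (S (2 * N))).
  - right. apply wsumR_ext. intros k _. unfold Hs_wt, sscal. rewrite Cmod_mult, Cmod_R. ring.
  - rewrite wsumR_scal. pose proof (wsumR_Hs_wt_le t x (- Z.of_nat N)%Z (S (2 * N)) Hx).
    pose proof (Rabs_pos a). replace (Rabs a * Hnorm t x * (Rabs a * Hnorm t x))
      with (Rabs a * Rabs a * Hnorm t x ^ 2) by ring.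
    apply Rmult_le_compat_l; nra.
Qed.

Lemma in_H_zero t : in_H t (fun _ => RtoC 0) /\ Hnorm t (fun _ => RtoC 0) <= 0.
Proof.
  apply in_H_of_bounded; [lra|]. intros N. rewrite zpsumR_wsumR.
  transitivity (wsumR (fun k => 0 * Hs_wt t (fun _ => RtoC 0) k) (- Z.of_nat N)%Z (S (2 * N))).
  - right. apply wsumR_ext. intros. unfold Hs_wt. rewrite Cmod_0. ring.
  - rewrite wsumR_scal. lra.
Qed.

(** * [H^s] is an algebra for [s > 1/2] *)

Lemma Rpower_opp_diff_ge p x : 0 < p -> 1 <= x ->
  p * Rpower (x + 1) (- (p + 1)) <= Rpower x (- p) - Rpower (x + 1) (- p).
Proof.
  intros Hp Hx. unfold Rpower.
  set (L1 := ln x). set (L2 := ln (x + 1)).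
  assert (Hd : / (x + 1) <= L2 - L1).
  { pose proof (exp_ineq1_le (ln (x / (x + 1)))) as H.
    rewrite exp_ln in H by (apply Rdiv_lt_0_compat; lra).
    rewrite ln_div in H by lra. fold L1 L2 in H.
    replace (x / (x + 1)) with (1 - / (x + 1)) in H by (field; lra). lra. }
  assert (E1 : exp (- p * L1) = exp (- p * L2) * exp (p * (L2 - L1)))
    by (rewrite <- exp_plus; f_equal; ring).
  assert (E2 : exp (- (p + 1) * L2) = exp (- p * L2) * / (x + 1)).
  { replace (- (p + 1) * L2) with (- p * L2 + - L2) by ring. rewrite exp_plus, exp_Ropp.
    unfold L2. rewrite exp_ln by lra. reflexivity. }
  pose proof (exp_ineq1_le (p * (L2 - L1))). pose proof (exp_pos (- p * L2)).
  assert (p * / (x + 1) <= p * (L2 - L1)) by (apply Rmult_le_compat_l; lra).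
  rewrite E1, E2. nra.
Qed.

Section ZetaBound.
Variable s : R.
Hypothesis hs : 1 / 2 < s.

Let p := 2 * s - 1.
Let c := Rpower 2 s / p.

Let p_pos : 0 < p.
Proof. unfold p. lra. Qed.

Let c_pos : 0 < c.
Proof. apply Rdiv_lt_0_compat; [apply exp_pos | apply p_pos]. Qed.

Let Rpower_opp_p_le_1 x : 1 <= x -> 0 < Rpower x (- p) <= 1.
Proof.
  intros Hx. split; [apply exp_pos|].
  rewrite <- (Rpower_O x) by lra. apply Rle_Rpower; auto. pose proof p_pos. lra.
Qed.

Lemma jbracket_opp_le (k : Z) :
  jbracket (- s) k <= Rpower 2 s * Rpower (IZR (Z.abs k) + 1) (- (2 * s)).
Proof.
  unfold jbracket. rewrite !Rpower_Ropp.
  set (y := IZR (Z.abs k) + 1).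
  assert (Hy : 1 <= y) by (unfold y; pose proof (IZR_le 0 (Z.abs k) ltac:(lia)); lra).
  assert (Hyy : y * y / 2 <= IZR k ^ 2 + 1).
  { unfold y. rewrite abs_IZR. pose proof (Rabs_pos (IZR k)).
    replace (IZR k ^ 2) with (Rabs (IZR k) * Rabs (IZR k))
      by (rewrite <- Rabs_mult, Rabs_pos_eq; [ring | nra]).
    pose proof (pow2_ge_0 (Rabs (IZR k) - 1)). nra. }
  assert (H1 : Rpower (y * y / 2) s <= Rpower (IZR k ^ 2 + 1) s)
    by (apply Rle_Rpower_l; [lra | split; nra]).
  assert (H2 : Rpower (y * y / 2) s = Rpower y (2 * s) / Rpower 2 s).
  { unfold Rdiv. rewrite <- !Rpower_mult_distr by (try apply Rinv_0_lt_compat; nra).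
    replace (Rpower (/ 2) s) with (/ Rpower 2 s)
      by (unfold Rpower; rewrite ln_Rinv, <- exp_Ropp by lra; f_equal; ring).
    replace (2 * s) with (s + s) by ring. rewrite Rpower_plus. reflexivity. }
  assert (P1 : 0 < Rpower y (2 * s)) by apply exp_pos.
  assert (P2 : 0 < Rpower 2 s) by apply exp_pos.
  rewrite H2 in H1.
  apply Rle_trans with (/ (Rpower y (2 * s) / Rpower 2 s)).
  - apply Rinv_le_contravar; [apply Rdiv_lt_0_compat|]; auto.
  - right. field. split; lra.
Qed.

Lemma jbracket_opp_le_diff (k : Z) : (1 <= Z.abs k)%Z ->
  jbracket (- s) k <= c * (Rpower (IZR (Z.abs k)) (- p) - Rpower (IZR (Z.abs k) + 1) (- p)).
Proof.
  intros Hk. eapply Rle_trans; [apply jbracket_opp_le|].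
  pose proof (Rpower_opp_diff_ge p (IZR (Z.abs k)) p_pos (IZR_le 1 _ Hk)) as T.
  replace (- (p + 1)) with (- (2 * s)) in T by (unfold p; ring).
  assert (0 < Rpower 2 s) by apply exp_pos. pose proof p_pos.
  apply Rle_trans with (c * (p * Rpower (IZR (Z.abs k) + 1) (- (2 * s)))).
  - right. unfold c. field. lra.
  - apply Rmult_le_compat_l; [left; apply c_pos | exact T].
Qed.

(* A bounded nondecreasing function of [k] whose increments dominate [<k>^(-2s)]:
   the sum of [<k>^(-2s)] over any window telescopes below its oscillation [2c+1]. *)
Let zeta_primitive (k : Z) : R :=
  if Z.leb k 0 then c * Rpower (1 - IZR k) (- p) else 2 * c + 1 - c * Rpower (IZR k) (- p).

Let zeta_primitive_step (k : Z) : jbracket (- s) k <= zeta_primitive (k + 1) - zeta_primitive k.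
Proof.
  pose proof c_pos. unfold zeta_primitive.
  destruct (Z_lt_le_dec k 0) as [Hk|Hk]; [|destruct (Z.eq_dec k 0) as [E|E]].
  - rewrite (proj2 (Z.leb_le k 0)), (proj2 (Z.leb_le (k + 1) 0)) by lia.
    eapply Rle_trans; [apply jbracket_opp_le_diff; lia|].
    rewrite abs_IZR, Rabs_left, plus_IZR by (apply IZR_lt; lia).
    replace (1 - (IZR k + 1)) with (- IZR k) by ring.
    replace (1 - IZR k) with (- IZR k + 1) by ring. right. ring.
  - subst. simpl. unfold jbracket. replace (0 ^ 2 + 1) with 1 by ring.
    replace (1 - 0) with 1 by ring. unfold Rpower. rewrite ln_1, !Rmult_0_r, exp_0. lra.
  - rewrite (proj2 (Z.leb_gt k 0)), (proj2 (Z.leb_gt (k + 1) 0)) by lia.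
    eapply Rle_trans; [apply jbracket_opp_le_diff; lia|].
    rewrite Z.abs_eq, plus_IZR by lia. right. ring.
Qed.

Let zeta_primitive_bounds k : 0 <= zeta_primitive k <= 2 * c + 1.
Proof.
  pose proof c_pos. unfold zeta_primitive. destruct (Z.leb_spec k 0) as [Hk|Hk].
  - pose proof (Rpower_opp_p_le_1 (1 - IZR k) ltac:(apply IZR_le in Hk; lra)). split; nra.
  - pose proof (Rpower_opp_p_le_1 (IZR k) ltac:(apply IZR_le; lia)). split; nra.
Qed.

Definition zeta_const : R := 2 * c + 1.

Lemma zeta_const_pos : 0 < zeta_const.
Proof. unfold zeta_const. pose proof c_pos. lra. Qed.

Lemma wsumR_jbracket_opp_le a m : wsumR (jbracket (- s)) a m <= zeta_const.
Proof.
  assert (T : forall m a, wsumR (jbracket (- s)) a m <=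
                          zeta_primitive (a + Z.of_nat m) - zeta_primitive a).
  { induction m0 as [|m0 IH]; intros a0.
    - rewrite wsumR_O, Z.add_0_r. lra.
    - rewrite wsumR_S. specialize (IH (Z.succ a0)). pose proof (zeta_primitive_step a0).
      replace (Z.succ a0 + Z.of_nat m0)%Z with (a0 + Z.of_nat (S m0))%Z in IH by lia.
      replace (Z.succ a0) with (a0 + 1)%Z in * by lia. lra. }
  eapply Rle_trans; [apply T|].
  pose proof (zeta_primitive_bounds (a + Z.of_nat m)). pose proof (zeta_primitive_bounds a).
  unfold zeta_const. lra.
Qed.

End ZetaBound.

Lemma wsumR_Cmod_le_Hnorm s (hs : 1 / 2 < s) w a m : in_H s w ->
  wsumR (fun k => Cmod (w k)) a m <= sqrt (zeta_const s) * Hnorm s w.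
Proof.
  intros Hw.
  set (P := wsumR (fun k => Cmod (w k)) a m).
  assert (HP : P * P <= wsumR (Hs_wt s w) a m * zeta_const s).
  { pose proof (wsumR_Cauchy_Schwarz1 (jbracket (- s)) (fun k => jbracket s k * Cmod (w k)) m a
                  (fun k => Rlt_le _ _ (jbracket_pos _ k))) as H.
    cbv beta in H.
    replace (wsumR (fun k => jbracket (- s) k * (jbracket s k * Cmod (w k))) a m) with P in H
      by (apply wsumR_ext; intros k _;
          rewrite <- Rmult_assoc, jbracket_opp_mul; ring).
    replace (wsumR (fun k => jbracket (- s) k * (jbracket s k * Cmod (w k))
                                * (jbracket s k * Cmod (w k))) a m)
      with (wsumR (Hs_wt s w) a m) in H
      by (apply wsumR_ext; intros k _; unfold Hs_wt; fold (jbracket s k);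
          rewrite <- (Rmult_1_l (jbracket s k)) at 1; rewrite <- (jbracket_opp_mul s k); ring).
    eapply Rle_trans; [apply H|].
    apply Rmult_le_compat_l; [apply wsumR_nonneg, Hs_wt_nonneg | apply wsumR_jbracket_opp_le, hs]. }
  pose proof (zeta_const_pos s hs).
  assert (P <= sqrt (wsumR (Hs_wt s w) a m) * sqrt (zeta_const s)).
  { apply sqrt_le_of_sqr_le; auto; [apply wsumR_nonneg; intros; apply Cmod_ge_0 |
                                    apply wsumR_nonneg, Hs_wt_nonneg | lra]. }
  pose proof (sqrt_wsumR_Hs_wt_le s w a m Hw). pose proof (sqrt_pos (zeta_const s)).
  pose proof (sqrt_pos (wsumR (Hs_wt s w) a m)). nra.
Qed.

(* Young's inequality [|A * b|_2 <= |b|_1 |A|_2], truncated to windows. *)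
Lemma young_window_l2_l1 (A b : Z -> R) beta nA nL kA kL :
  (forall k, 0 <= A k) -> (forall k, 0 <= b k) -> (forall c l, wsumR b c l <= beta) ->
  wsumR (fun n => wsumR (fun k => A k * b (n - k)%Z) kA kL
                  * wsumR (fun k => A k * b (n - k)%Z) kA kL) nA nL
  <= beta * beta * wsumR (fun k => A k * A k) kA kL.
Proof.
  intros HA Hb Hbeta.
  assert (Hbeta0 : 0 <= beta) by (eapply Rle_trans; [|apply (Hbeta 0%Z O)]; rewrite wsumR_O; lra).
  apply Rle_trans
    with (wsumR (fun n => wsumR (fun k => b (n - k)%Z * A k * A k * beta) kA kL) nA nL).
  - apply wsumR_le. intros n _. rewrite wsumR_scal_r.
    replace (wsumR (fun k => A k * b (n - k)%Z) kA kL)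
      with (wsumR (fun k => b (n - k)%Z * A k) kA kL) by (apply wsumR_ext; intros; ring).
    eapply Rle_trans; [apply wsumR_Cauchy_Schwarz1; intros; apply Hb|].
    apply Rmult_le_compat_l; [apply wsumR_nonneg; intros k; apply Rmult_sqr_nonneg, Hb|].
    rewrite wsumR_reflect. apply Hbeta.
  - rewrite wsumR_comm, <- wsumR_scal. apply wsumR_le. intros k _.
    replace (wsumR (fun n => b (n - k)%Z * A k * A k * beta) nA nL)
      with (A k * A k * beta * wsumR (fun n => b (n + - k)%Z) nA nL)
      by (rewrite <- wsumR_scal; apply wsumR_ext; intros; rewrite Z.add_opp_r; ring).
    rewrite wsumR_shift. pose proof (Hbeta (nA + - k)%Z nL).
    assert (0 <= A k * A k) by (apply Rmult_le_pos; apply HA).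
    apply Rle_trans with (A k * A k * beta * beta); [apply Rmult_le_compat_l; nra | right; ring].
Qed.

(* Young's inequality [|a * B|_2 <= |a|_1 |B|_2], truncated to windows. *)
Lemma young_window_l1_l2 (a B : Z -> R) alpha gamma nA nL kA kL :
  (forall k, 0 <= a k) -> (forall k, 0 <= B k) ->
  wsumR a kA kL <= alpha -> (forall c l, wsumR (fun j => B j * B j) c l <= gamma) ->
  wsumR (fun n => wsumR (fun k => a k * B (n - k)%Z) kA kL
                  * wsumR (fun k => a k * B (n - k)%Z) kA kL) nA nL
  <= alpha * alpha * gamma.
Proof.
  intros Ha HB Halpha Hgamma.
  assert (Hg0 : 0 <= gamma) by (eapply Rle_trans; [|apply (Hgamma 0%Z O)]; rewrite wsumR_O; lra).
  assert (Ha0 : 0 <= wsumR a kA kL) by (apply wsumR_nonneg; auto).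
  apply Rle_trans
    with (wsumR (fun n => wsumR (fun k => a k * B (n - k)%Z * B (n - k)%Z * alpha) kA kL) nA nL).
  - apply wsumR_le. intros n _. rewrite wsumR_scal_r.
    eapply Rle_trans; [apply wsumR_Cauchy_Schwarz1; exact Ha|].
    apply Rmult_le_compat_l; auto. apply wsumR_nonneg. intros k. apply Rmult_sqr_nonneg, Ha.
  - rewrite wsumR_comm.
    apply Rle_trans with (wsumR (fun k => alpha * gamma * a k) kA kL).
    + apply wsumR_le. intros k _.
      replace (wsumR (fun n => a k * B (n - k)%Z * B (n - k)%Z * alpha) nA nL)
        with (a k * alpha * wsumR (fun n => (fun j => B j * B j) (n + - k)%Z) nA nL)
        by (rewrite <- wsumR_scal; apply wsumR_ext; intros; rewrite Z.add_opp_r; ring).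
      rewrite (wsumR_shift (fun j => B j * B j)). pose proof (Hgamma (nA + - k)%Z nL). pose proof (Ha k).
      apply Rle_trans with (a k * alpha * gamma); [apply Rmult_le_compat_l; nra | right; ring].
    + rewrite wsumR_scal. apply Rle_trans with (alpha * gamma * alpha);
        [apply Rmult_le_compat_l; nra | right; ring].
Qed.

Lemma Cmod_triangle_rev (x y : C) : Rabs (Cmod x - Cmod y) <= Cmod (Cminus x y).
Proof.
  pose proof (Cmod_triangle (Cminus x y) y). pose proof (Cmod_triangle (Copp (Cminus x y)) x).
  rewrite Cmod_opp in H0.
  replace (Cplus (Cminus x y) y) with x in H by (apply injective_projections; simpl; ring).
  replace (Cplus (Copp (Cminus x y)) x) with y in H0 by (apply injective_projections; simpl; ring).
  apply Rabs_le. lra.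
Qed.

Lemma is_lim_seq_Cmod_zpsum (f : Z -> C) l : is_zsumC f l ->
  is_lim_seq (fun M => Cmod (zpsum f M)) (Cmod l).
Proof.
  intros H. apply is_lim_seq_spec. intros eps.
  destruct (proj1 (is_zsumC_spec f l) H eps (cond_pos eps)) as [N0 HN0].
  exists N0. intros N HN. eapply Rle_lt_trans; [apply Cmod_triangle_rev | auto].
Qed.

Lemma is_lim_seq_wsumR (g : Z -> nat -> R) (L : Z -> R) m : forall a,
  (forall n, is_lim_seq (g n) (L n)) -> is_lim_seq (fun M => wsumR (fun n => g n M) a m) (wsumR L a m).
Proof.
  induction m as [|m IH]; intros a H.
  - apply is_lim_seq_ext with (fun _ => 0); [reflexivity | apply is_lim_seq_const].
  - apply is_lim_seq_ext with (fun M => g a M + wsumR (fun n => g n M) (Z.succ a) m);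
      [reflexivity|].
    apply is_lim_seq_plus'; auto.
Qed.

Definition alg_const (s : R) : R := 4 * Rpower 2 s * Rpower 2 s * zeta_const s.

Section Algebra.
Variable s : R.
Hypothesis hs : 1 / 2 < s.

Lemma conv_at_dominated (u v : seqZ) n k :
  Cmod (conv_at u v n k) <= / 2 * (Hs_wt s u k + Hs_wt s v (n - k)%Z).
Proof.
  unfold conv_at. rewrite Cmod_mult.
  pose proof (Cmod_sqr_le_Hs_wt s u k ltac:(lra)).
  pose proof (Cmod_sqr_le_Hs_wt s v (n - k)%Z ltac:(lra)).
  pose proof (pow2_ge_0 (Cmod (u k) - Cmod (v (n - k)%Z))). nra.
Qed.

Lemma conv_dominator_bounded (u v : seqZ) n c : 0 <= c -> in_H s u -> in_H s v ->
  zpsumR_bounded (fun k => c * (Hs_wt s u k + Hs_wt s v (n - k)%Z))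
                 (c * (Hnorm s u ^ 2 + Hnorm s v ^ 2)).
Proof.
  intros Hc Hu Hv N. rewrite zpsumR_wsumR, wsumR_scal, wsumR_plus.
  apply Rmult_le_compat_l; [exact Hc|].
  rewrite wsumR_reflect. pose proof (wsumR_Hs_wt_le s u (- Z.of_nat N)%Z (S (2 * N)) Hu).
  pose proof (wsumR_Hs_wt_le s v (n - - Z.of_nat N - Z.of_nat (S (2 * N)) + 1)%Z (S (2 * N)) Hv).
  lra.
Qed.

Lemma is_zsumC_conv (u v : seqZ) n : in_H s u -> in_H s v -> is_zsumC (conv_at u v n) (conv u v n).
Proof.
  intros Hu Hv.
  destruct (is_zsumC_dominated (conv_at u v n) _ _ (conv_at_dominated u v n)
              (conv_dominator_bounded u v n (/ 2) ltac:(lra) Hu Hv)) as [l Hl].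
  unfold conv. rewrite (is_zsumC_unique _ _ Hl). exact Hl.
Qed.

Variables u v : seqZ.
Hypothesis Hu : in_H s u.
Hypothesis Hv : in_H s v.

Let c2 := Rpower 2 s.
Let rho := jbracket (s / 2).
Let P n kA kL := wsumR (fun k => Cmod (u k) * Cmod (v (n - k)%Z)) kA kL.
Let X n kA kL := wsumR (fun k => (rho k * Cmod (u k)) * Cmod (v (n - k)%Z)) kA kL.
Let Y n kA kL := wsumR (fun k => Cmod (u k) * (rho (n - k)%Z * Cmod (v (n - k)%Z))) kA kL.

Lemma conv_window_weight_split n kA kL :
  jbracket s n * (P n kA kL * P n kA kL)
  <= 2 * (c2 * c2) * (X n kA kL * X n kA kL + Y n kA kL * Y n kA kL).
Proof.
  assert (Hc2 : 0 < c2) by apply exp_pos.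
  assert (Hrho : forall k, 0 < rho k) by (intros; apply jbracket_pos).
  assert (HS0 : 0 <= P n kA kL)
    by (apply wsumR_nonneg; intros; apply Rmult_le_pos; apply Cmod_ge_0).
  assert (H1 : rho n * P n kA kL <= c2 * (X n kA kL + Y n kA kL)).
  { unfold P, X, Y. rewrite <- wsumR_scal, <- wsumR_plus, <- wsumR_scal.
    apply wsumR_le. intros k _.
    pose proof (jbracket_half_split s n k ltac:(lra)).
    pose proof (Cmod_ge_0 (u k)). pose proof (Cmod_ge_0 (v (n - k)%Z)).
    assert (0 <= Cmod (u k) * Cmod (v (n - k)%Z)) by (apply Rmult_le_pos; auto).
    apply Rle_trans with (c2 * (rho k + rho (n - k)%Z) * (Cmod (u k) * Cmod (v (n - k)%Z)));
      [apply Rmult_le_compat_r; auto | right; ring]. }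
  rewrite <- (jbracket_half_sqr s n). fold rho.
  assert (0 <= rho n * P n kA kL) by (apply Rmult_le_pos; auto; left; auto).
  apply Rle_trans with ((c2 * (X n kA kL + Y n kA kL)) * (c2 * (X n kA kL + Y n kA kL))).
  - replace (rho n * rho n * (P n kA kL * P n kA kL))
      with ((rho n * P n kA kL) * (rho n * P n kA kL)) by ring.
    apply Rmult_le_compat; auto.
  - pose proof (pow2_ge_0 (X n kA kL - Y n kA kL)). nra.
Qed.

Lemma conv_window_le nA nL kA kL :
  wsumR (fun n => jbracket s n * (P n kA kL * P n kA kL)) nA nL
  <= alg_const s * Hnorm s u ^ 2 * Hnorm s v ^ 2.
Proof.
  assert (Hrho : forall k, 0 < rho k) by (intros; apply jbracket_pos).
  assert (Hrho_sqr : forall w k, rho k * Cmod (w k) * (rho k * Cmod (w k)) = Hs_wt s w k).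
  { intros w k. unfold Hs_wt. fold (jbracket s k). rewrite <- (jbracket_half_sqr s k). fold rho.
    ring. }
  set (Zu := sqrt (zeta_const s) * Hnorm s u). set (Zv := sqrt (zeta_const s) * Hnorm s v).
  eapply Rle_trans; [apply wsumR_le; intros n _; apply conv_window_weight_split|].
  rewrite wsumR_scal, wsumR_plus.
  assert (HX : wsumR (fun n => X n kA kL * X n kA kL) nA nL <= Zv * Zv * Hnorm s u ^ 2).
  { unfold X. eapply Rle_trans;
      [apply (young_window_l2_l1 (fun k => rho k * Cmod (u k)) (fun k => Cmod (v k)))|].
    - intros k. apply Rmult_le_pos; [left; auto | apply Cmod_ge_0].
    - intros k. apply Cmod_ge_0.
    - intros c l. apply (wsumR_Cmod_le_Hnorm s hs v c l Hv).
    - apply Rmult_le_compat_l; [unfold Zv; pose proof (sqrt_pos (zeta_const s));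
                                pose proof (Hnorm_nonneg s v); nra|].
      rewrite (wsumR_ext _ (Hs_wt s u)) by (intros; apply Hrho_sqr). apply wsumR_Hs_wt_le, Hu. }
  assert (HY : wsumR (fun n => Y n kA kL * Y n kA kL) nA nL <= Zu * Zu * Hnorm s v ^ 2).
  { unfold Y. apply (young_window_l1_l2 (fun k => Cmod (u k)) (fun j => rho j * Cmod (v j))).
    - intros k. apply Cmod_ge_0.
    - intros k. apply Rmult_le_pos; [left; auto | apply Cmod_ge_0].
    - apply (wsumR_Cmod_le_Hnorm s hs u kA kL Hu).
    - intros c l. rewrite (wsumR_ext _ (Hs_wt s v)) by (intros; apply Hrho_sqr).
      apply wsumR_Hs_wt_le, Hv. }
  pose proof (zeta_const_pos s hs).
  assert (E : sqrt (zeta_const s) * sqrt (zeta_const s) = zeta_const s) by (apply sqrt_sqrt; lra).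
  assert (Hc2 : 0 < c2) by apply exp_pos.
  apply Rle_trans with (2 * (c2 * c2) * (Zv * Zv * Hnorm s u ^ 2 + Zu * Zu * Hnorm s v ^ 2));
    [apply Rmult_le_compat_l; nra|].
  right. unfold alg_const, Zu, Zv. fold c2.
  replace (sqrt (zeta_const s) * Hnorm s v * (sqrt (zeta_const s) * Hnorm s v))
    with (sqrt (zeta_const s) * sqrt (zeta_const s) * (Hnorm s v * Hnorm s v)) by ring.
  replace (sqrt (zeta_const s) * Hnorm s u * (sqrt (zeta_const s) * Hnorm s u))
    with (sqrt (zeta_const s) * sqrt (zeta_const s) * (Hnorm s u * Hnorm s u)) by ring.
  rewrite E. ring.
Qed.

Lemma alg_const_nonneg : 0 <= alg_const s.
Proof.
  unfold alg_const. pose proof (zeta_const_pos s hs). pose proof (exp_pos (s * ln 2)).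
  change (exp (s * ln 2)) with c2 in H0. nra.
Qed.

Lemma conv_in_H : in_H s (conv u v) /\
  Hnorm s (conv u v) <= sqrt (alg_const s) * Hnorm s u * Hnorm s v.
Proof.
  pose proof alg_const_nonneg. pose proof (sqrt_pos (alg_const s)).
  pose proof (Hnorm_nonneg s u). pose proof (Hnorm_nonneg s v).
  apply in_H_of_bounded; [apply Rmult_le_pos; [apply Rmult_le_pos|]; auto|].
  intros N. rewrite zpsumR_wsumR.
  replace (sqrt (alg_const s) * Hnorm s u * Hnorm s v * (sqrt (alg_const s) * Hnorm s u * Hnorm s v))
    with (sqrt (alg_const s) * sqrt (alg_const s) * Hnorm s u ^ 2 * Hnorm s v ^ 2) by ring.
  rewrite sqrt_sqrt by auto.
  set (a := (- Z.of_nat N)%Z). set (m := S (2 * N)).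
  assert (HL : is_lim_seq
                 (fun M => wsumR (fun n => jbracket s n * (Cmod (zpsum (conv_at u v n) M)
                                                         * Cmod (zpsum (conv_at u v n) M))) a m)
                 (wsumR (Hs_wt s (conv u v)) a m)).
  { apply is_lim_seq_wsumR. intros n.
    pose proof (is_lim_seq_Cmod_zpsum _ _ (is_zsumC_conv u v n Hu Hv)) as H3.
    replace (Hs_wt s (conv u v) n) with (jbracket s n * (Cmod (conv u v n) * Cmod (conv u v n)))
      by (unfold Hs_wt, jbracket; ring).
    apply (is_lim_seq_scal_l _ _ (Cmod (conv u v n) * Cmod (conv u v n))).
    apply (is_lim_seq_mult' _ _ (Cmod (conv u v n)) (Cmod (conv u v n))); exact H3. }
  assert (Hle : Rbar_le (wsumR (Hs_wt s (conv u v)) a m)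
                        (alg_const s * Hnorm s u ^ 2 * Hnorm s v ^ 2)).
  { refine (is_lim_seq_le _ _ _ _ _ HL (is_lim_seq_const _)). intros M.
    eapply Rle_trans; [|apply (conv_window_le a m (- Z.of_nat M)%Z (S (2 * M)))].
    apply wsumR_le. intros n _. apply Rmult_le_compat_l; [left; apply jbracket_pos|].
    rewrite zpsum_wsumC.
    assert (Hn : Cmod (wsumC (conv_at u v n) (- Z.of_nat M) (S (2 * M)))
                 <= P n (- Z.of_nat M)%Z (S (2 * M)))
      by (apply wsumC_norm_le; intros k; unfold conv_at; rewrite Cmod_mult; lra).
    pose proof (Cmod_ge_0 (wsumC (conv_at u v n) (- Z.of_nat M) (S (2 * M)))).
    apply Rmult_le_compat; auto. }
  exact Hle.
Qed.

End Algebra.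

(** * The bilinear form behind [Htilde] *)

Lemma Cmod_cexpi t : Cmod (cexpi t) = 1.
Proof.
  unfold Cmod, cexpi. cbn [fst snd]. pose proof (sin2_cos2 t). unfold Rsqr in H.
  replace (cos t ^ 2 + sin t ^ 2) with 1 by nra. apply sqrt_1.
Qed.

Lemma cexpi_add x y : cexpi (x + y) = Cmult (cexpi x) (cexpi y).
Proof. unfold cexpi. rewrite cos_plus, sin_plus. apply injective_projections; simpl; ring. Qed.

Lemma Hs_wt_H1 s tau w : Hs_wt s (H1 tau w) = Hs_wt s w.
Proof.
  apply functional_extensionality. intros k. unfold Hs_wt, H1.
  rewrite Cmod_mult, Cmod_cexpi. ring.
Qed.

Lemma in_H_H1 s tau w : in_H s w -> in_H s (H1 tau w).
Proof. unfold in_H. rewrite Hs_wt_H1. auto. Qed.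

Lemma Hnorm_H1 s tau w : Hnorm s (H1 tau w) = Hnorm s w.
Proof. unfold Hnorm. rewrite Hs_wt_H1. reflexivity. Qed.

Lemma Cmod_dx w n : Cmod (dx w n) = Rabs (IZR n) * Cmod (w n).
Proof. unfold dx. rewrite !Cmod_mult, Cmod_Ci, Cmod_R. ring. Qed.

Lemma dx_in_H s x : in_H s x -> in_H (s - 1) (dx x) /\ Hnorm (s - 1) (dx x) <= Hnorm s x.
Proof.
  intros Hx. apply in_H_of_bounded; [apply Hnorm_nonneg|]. intros N.
  rewrite zpsumR_wsumR. replace (Hnorm s x * Hnorm s x) with (Hnorm s x ^ 2) by ring.
  eapply Rle_trans; [|apply (wsumR_Hs_wt_le s x (- Z.of_nat N) (S (2 * N)) Hx)].
  apply wsumR_le. intros n _. unfold Hs_wt. fold (jbracket (s - 1) n) (jbracket s n).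
  rewrite Cmod_dx, (jbracket_pred s n), Rpow_mult_distr, pow2_abs.
  pose proof (jbracket_pos (s - 1) n). pose proof (pow2_ge_0 (Cmod (x n))).
  replace (jbracket (s - 1) n * (IZR n ^ 2 * Cmod (x n) ^ 2))
    with (jbracket (s - 1) n * Cmod (x n) ^ 2 * IZR n ^ 2) by ring.
  replace (jbracket (s - 1) n * (IZR n ^ 2 + 1) * Cmod (x n) ^ 2)
    with (jbracket (s - 1) n * Cmod (x n) ^ 2 * (IZR n ^ 2 + 1)) by ring.
  apply Rmult_le_compat_l; [apply Rmult_le_pos; lra | lra].
Qed.

Definition Hbil (tau : R) (u v : seqZ) : seqZ :=
  sscal (/ 2) (H1 (- tau) (dx (conv (H1 tau u) (H1 tau v)))).

Lemma Hbil_in_H s (hs : 1 / 2 < s) tau u v : in_H s u -> in_H s v ->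
  in_H (s - 1) (Hbil tau u v) /\
  Hnorm (s - 1) (Hbil tau u v) <= sqrt (alg_const s) / 2 * Hnorm s u * Hnorm s v.
Proof.
  intros Hu Hv.
  destruct (conv_in_H s hs (H1 tau u) (H1 tau v) (in_H_H1 s tau u Hu) (in_H_H1 s tau v Hv))
    as [Hc Hcn].
  rewrite !Hnorm_H1 in Hcn.
  destruct (dx_in_H s _ Hc) as [Hd Hdn].
  destruct (in_H_scal (s - 1) (/ 2) _ (in_H_H1 (s - 1) (- tau) _ Hd)) as [Hb Hbn].
  split; [exact Hb|]. rewrite Hnorm_H1, Rabs_pos_eq in Hbn by lra. unfold Hbil. lra.
Qed.

Lemma le_scal_sum_of_sqr_le t c X Y : 0 <= t -> 1 <= c -> 0 <= X -> 0 <= Y ->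
  t * t <= c * X * Y -> t <= c * (X + Y).
Proof.
  intros Ht Hc HX HY H.
  assert (H1 : c * X * Y <= (c * (X + Y)) * (c * (X + Y))).
  { assert (X * Y <= (X + Y) * (X + Y)) by nra. assert (c * (X * Y) <= c * c * (X * Y)) by nra.
    nra. }
  destruct (Rle_dec t (c * (X + Y))) as [Hle|Hlt]; auto.
  apply Rnot_le_lt in Hlt. exfalso.
  assert (c * (X + Y) * (c * (X + Y)) < t * t) by (apply Rmult_le_0_lt_compat; nra). lra.
Qed.

(* [|n - k|^2 <= (|n| + 1) <k> <n - k>], so the derivative on the second factor of [u * dx u]
   costs only the weight [<k>^(1/2) <n - k>^(1/2)], which [s > 1/2] absorbs. *)
Lemma conv_at_dx_dominated s (hs : 1 / 2 < s) u n k :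
  Cmod (conv_at u (dx u) n k) <= (Rabs (IZR n) + 1) * (Hs_wt s u k + Hs_wt s u (n - k)%Z).
Proof.
  unfold conv_at. rewrite Cmod_mult, Cmod_dx.
  set (j := (n - k)%Z).
  set (K := sqrt (IZR k ^ 2 + 1)). set (J := sqrt (IZR j ^ 2 + 1)).
  assert (HK1 : Rabs (IZR k) <= K).
  { unfold K. rewrite <- sqrt_Rsqr_abs. apply sqrt_le_1_alt. unfold Rsqr. nra. }
  assert (HK2 : 1 <= K).
  { unfold K. rewrite <- sqrt_1 at 1. apply sqrt_le_1_alt, jbracket_base_ge_1. }
  assert (HJ1 : Rabs (IZR j) <= J).
  { unfold J. rewrite <- sqrt_Rsqr_abs. apply sqrt_le_1_alt. unfold Rsqr. nra. }
  assert (Hj : Rabs (IZR j) <= Rabs (IZR n) + Rabs (IZR k)).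
  { unfold j. rewrite minus_IZR. unfold Rminus.
    eapply Rle_trans; [apply Rabs_triang | rewrite Rabs_Ropp; lra]. }
  pose proof (Rabs_pos (IZR n)). pose proof (Rabs_pos (IZR j)). pose proof (Rabs_pos (IZR k)).
  assert (Hjj : Rabs (IZR j) * Rabs (IZR j) <= (Rabs (IZR n) + 1) * K * J).
  { apply Rle_trans with ((Rabs (IZR n) + 1) * K * Rabs (IZR j));
      [apply Rmult_le_compat_r; nra | apply Rmult_le_compat_l; nra]. }
  pose proof (jbracket_ge_sqrt s k ltac:(lra)). pose proof (jbracket_ge_sqrt s j ltac:(lra)).
  fold K J in H2, H3.
  apply le_scal_sum_of_sqr_le; try apply Hs_wt_nonneg; try lra.
  - pose proof (Cmod_ge_0 (u k)). pose proof (Cmod_ge_0 (u j)). apply Rmult_le_pos; nra.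
  - unfold Hs_wt. fold (jbracket s k) (jbracket s j).
    set (a := Cmod (u k)). set (b := Cmod (u j)).
    assert (0 <= a * a) by nra. assert (0 <= b * b) by nra.
    assert (K * J <= jbracket s k * jbracket s j) by (apply Rmult_le_compat; lra).
    replace (a * (Rabs (IZR j) * b) * (a * (Rabs (IZR j) * b)))
      with ((Rabs (IZR j) * Rabs (IZR j)) * ((a * a) * (b * b))) by ring.
    replace ((Rabs (IZR n) + 1) * (jbracket s k * a ^ 2) * (jbracket s j * b ^ 2))
      with (((Rabs (IZR n) + 1) * (jbracket s k * jbracket s j)) * ((a * a) * (b * b))) by ring.
    apply Rmult_le_compat_r; [nra|].
    eapply Rle_trans; [apply Hjj|]. rewrite Rmult_assoc. apply Rmult_le_compat_l; nra.
Qed.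

Lemma is_zsumC_conv_dx s (hs : 1 / 2 < s) u n : in_H s u ->
  is_zsumC (conv_at u (dx u) n) (conv u (dx u) n).
Proof.
  intros Hu.
  destruct (is_zsumC_dominated _ _ _ (conv_at_dx_dominated s hs u n)
              (conv_dominator_bounded s u u n (Rabs (IZR n) + 1)
                 ltac:(pose proof (Rabs_pos (IZR n)); lra) Hu Hu)) as [l Hl].
  unfold conv. rewrite (is_zsumC_unique _ _ Hl). exact Hl.
Qed.

(* Pairing [k] with [n - k] turns [u_k (i(n-k)) u_(n-k)] into half of [i n u_k u_(n-k)]. *)
Lemma conv_dx_self s (hs : 1 / 2 < s) u n : in_H s u ->
  conv u (dx u) n = Cmult (RtoC (/ 2)) (Cmult (Cmult Ci (RtoC (IZR n))) (conv u u n)).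
Proof.
  intros Hu.
  pose proof (is_zsumC_conv_dx s hs u n Hu) as Hl.
  pose proof (is_zsumC_reflect _ _ _ (conv_at_dx_dominated s hs u n)
                (conv_dominator_bounded s u u n (Rabs (IZR n) + 1)
                   ltac:(pose proof (Rabs_pos (IZR n)); lra) Hu Hu) _ Hl n) as Hr.
  pose proof (is_zsumC_plus _ _ _ _ Hl Hr) as Hp. cbv beta in Hp.
  replace (fun k => Cplus (conv_at u (dx u) n k) (conv_at u (dx u) n (n - k)%Z))
    with (fun k => Cmult (Cmult Ci (RtoC (IZR n))) (conv_at u u n k)) in Hp.
  - pose proof (is_zsumC_scal_l (Cmult Ci (RtoC (IZR n))) _ _ (is_zsumC_conv s hs u u n Hu Hu))
      as Hq.
    rewrite <- (is_zsumC_unique _ _ Hq), (is_zsumC_unique _ _ Hp).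
    apply injective_projections; simpl; field.
  - apply functional_extensionality. intros k. unfold conv_at, dx.
    replace (n - (n - k))%Z with k by lia. rewrite minus_IZR.
    apply injective_projections; simpl; ring.
Qed.

Lemma Htilde_Hbil s (hs : 1 / 2 < s) tau w : in_H s w -> Htilde tau w = Hbil tau w w.
Proof.
  intros Hw. unfold Htilde, Hbil.
  replace (conv (H1 tau w) (dx (H1 tau w)))
    with (fun n => Cmult (RtoC (/ 2)) (Cmult (Cmult Ci (RtoC (IZR n))) (conv (H1 tau w) (H1 tau w) n))).
  - apply functional_extensionality. intros n. unfold sscal, H1, dx.
    apply injective_projections; simpl; ring.
  - apply functional_extensionality. intros n. symmetry.
    apply (conv_dx_self s hs), in_H_H1, Hw.
Qed.

(** * Smoothness of bounded quadratic maps *)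

Ltac seq_ring :=
  apply functional_extensionality; intros;
  unfold sadd, ssub, sscal; apply injective_projections; simpl; ring.

Lemma Hnorm_zero t : Hnorm t (fun _ => RtoC 0) = 0.
Proof. pose proof (proj2 (in_H_zero t)). pose proof (Hnorm_nonneg t (fun _ => RtoC 0)). lra. Qed.

Lemma prodR_nonneg k g : (forall j, 0 <= g j) -> 0 <= prodR k g.
Proof. intros H. induction k; simpl; [lra | apply Rmult_le_pos; auto]. Qed.

Section QuadraticSmooth.
Variables (s t K : R) (B : seqZ -> seqZ -> seqZ).
Hypothesis K_nonneg : 0 <= K.
Hypothesis B_bounded : forall u v, in_H s u -> in_H s v ->
  in_H t (B u v) /\ Hnorm t (B u v) <= K * Hnorm s u * Hnorm s v.
Hypothesis B_linear_l : forall u x y a b, in_H s u -> in_H s x -> in_H s y ->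
  B (sadd (sscal a x) (sscal b y)) u = sadd (sscal a (B x u)) (sscal b (B y u)).
Hypothesis B_linear_r : forall u x y a b, in_H s u -> in_H s x -> in_H s y ->
  B u (sadd (sscal a x) (sscal b y)) = sadd (sscal a (B u x)) (sscal b (B u y)).

Let sadd_as_comb x y : sadd x y = sadd (sscal 1 x) (sscal 1 y).
Proof. seq_ring. Qed.

Let B_add_l u x y : in_H s u -> in_H s x -> in_H s y -> B (sadd x y) u = sadd (B x u) (B y u).
Proof. intros. rewrite sadd_as_comb, B_linear_l by auto. rewrite (sadd_as_comb (B x u)). auto. Qed.

Let B_add_r u x y : in_H s u -> in_H s x -> in_H s y -> B u (sadd x y) = sadd (B u x) (B u y).
Proof. intros. rewrite sadd_as_comb, B_linear_r by auto. rewrite (sadd_as_comb (B u x)). auto. Qed.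

Let Bsym_bounded u v : in_H s u -> in_H s v ->
  in_H t (sadd (B u v) (B v u)) /\ Hnorm t (sadd (B u v) (B v u)) <= 2 * K * Hnorm s u * Hnorm s v.
Proof.
  intros Hu Hv.
  destruct (B_bounded u v Hu Hv) as [H1 H2]. destruct (B_bounded v u Hv Hu) as [H3 H4].
  destruct (in_H_plus t _ _ H1 H3) as [H5 H6]. split; [exact H5 | lra].
Qed.

Definition quad_deriv (k : nat) (w : seqZ) (v : nat -> seqZ) : seqZ :=
  match k with
  | O => B w w
  | 1%nat => sadd (B w (v O)) (B (v O) w)
  | 2%nat => sadd (B (v O) (v 1%nat)) (B (v 1%nat) (v O))
  | _ => fun _ => RtoC 0
  end.

Lemma quad_deriv_multilinear k w : in_H s w ->
  forall v i (a b : R) x y, (i < k)%nat ->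
  (forall j, (j < k)%nat -> in_H s (v j)) -> in_H s x -> in_H s y ->
  quad_deriv k w (upd v i (sadd (sscal a x) (sscal b y)))
  = sadd (sscal a (quad_deriv k w (upd v i x))) (sscal b (quad_deriv k w (upd v i y))).
Proof.
  intros Hw v i a b x y Hi Hv Hx Hy.
  destruct k as [|[|[|k]]]; [lia | | | seq_ring].
  - assert (i = O) by lia. subst i. cbn [quad_deriv upd Nat.eqb].
    rewrite B_linear_r, B_linear_l by auto. seq_ring.
  - pose proof (Hv O ltac:(lia)). pose proof (Hv 1%nat ltac:(lia)).
    destruct i as [|[|i]]; [| |lia]; cbn [quad_deriv upd Nat.eqb].
    + rewrite B_linear_r, B_linear_l by auto. seq_ring.
    + rewrite B_linear_r, B_linear_l by auto. seq_ring.
Qed.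

Lemma quad_deriv_bounded k w : in_H s w ->
  exists M, forall v, (forall j, (j < k)%nat -> in_H s (v j)) ->
  in_H t (quad_deriv k w v) /\ Hnorm t (quad_deriv k w v) <= M * prodR k (fun j => Hnorm s (v j)).
Proof.
  intros Hw. destruct k as [|[|[|k]]]; simpl.
  - exists (K * Hnorm s w * Hnorm s w). intros v _. rewrite Rmult_1_r. apply B_bounded; auto.
  - exists (2 * K * Hnorm s w). intros v Hv.
    destruct (Bsym_bounded w (v O) Hw (Hv O ltac:(lia))). split; [auto | lra].
  - exists (2 * K). intros v Hv.
    destruct (Bsym_bounded (v O) (v 1%nat) (Hv O ltac:(lia)) (Hv 1%nat ltac:(lia))).
    split; [auto | lra].
  - exists 0. intros v _. rewrite Hnorm_zero. split; [apply in_H_zero | lra].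
Qed.

Lemma quad_deriv_frechet k w : in_H s w ->
  forall eps : R, 0 < eps -> exists delta : R, 0 < delta /\
  forall h, in_H s h -> Hnorm s h < delta ->
  forall v, (forall j, (j < k)%nat -> in_H s (v j)) ->
  Hnorm t (ssub (ssub (quad_deriv k (sadd w h) v) (quad_deriv k w v)) (quad_deriv (S k) w (scons h v)))
  <= eps * Hnorm s h * prodR k (fun j => Hnorm s (v j)).
Proof.
  intros Hw eps Heps.
  assert (Hzero : forall v, (forall j, (j < k)%nat -> in_H s (v j)) -> forall h, in_H s h ->
    (1 <= k)%nat ->
    ssub (ssub (quad_deriv k (sadd w h) v) (quad_deriv k w v)) (quad_deriv (S k) w (scons h v))
    = fun _ => RtoC 0).
  { intros v Hv h Hh Hk. destruct k as [|[|[|k]]]; [lia | | seq_ring | seq_ring].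
    simpl. pose proof (Hv O ltac:(lia)).
    rewrite B_add_l, B_add_r by auto. seq_ring. }
  destruct k as [|k].
  - exists (eps / (K + 1)). split; [apply Rdiv_lt_0_compat; lra|].
    intros h Hh Hhd v _. simpl.
    replace (ssub (ssub (B (sadd w h) (sadd w h)) (B w w)) (sadd (B w h) (B h w))) with (B h h)
      by (rewrite B_add_l, !B_add_r by (auto; apply in_H_plus; auto); seq_ring).
    destruct (B_bounded h h Hh Hh) as [_ H2]. pose proof (Hnorm_nonneg s h).
    assert (Hq : (K + 1) * Hnorm s h <= eps).
    { apply Rle_trans with ((K + 1) * (eps / (K + 1))); [apply Rmult_le_compat_l; lra|].
      right. field. lra. }
    assert (K * Hnorm s h * Hnorm s h <= (K + 1) * Hnorm s h * Hnorm s h) by nra.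
    nra.
  - exists 1. split; [lra|]. intros h Hh _ v Hv.
    rewrite Hzero by (auto; lia). rewrite Hnorm_zero.
    pose proof (Hnorm_nonneg s h). pose proof (prodR_nonneg (S k) (fun j => Hnorm s (v j))
                                                (fun j => Hnorm_nonneg s (v j))).
    apply Rmult_le_pos; [apply Rmult_le_pos|]; lra.
Qed.

Lemma smooth_map_quadratic (Q : seqZ -> seqZ) :
  (forall w, in_H s w -> Q w = B w w) -> smooth_map s t Q.
Proof.
  intros HQ. exists quad_deriv. split; [intros w v Hw; symmetry; apply HQ, Hw|].
  intros k w Hw. split; [|split; [|split]].
  - intros v v' Hvv. destruct k as [|[|[|k]]]; simpl; try rewrite (Hvv O) by lia;
      try rewrite (Hvv 1%nat) by lia; reflexivity.
  - apply quad_deriv_multilinear, Hw.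
  - apply quad_deriv_bounded, Hw.
  - apply quad_deriv_frechet, Hw.
Qed.

End QuadraticSmooth.

Section ConvLinear.
Variable s : R.
Hypothesis hs : 1 / 2 < s.

Lemma conv_linear_r u x y (a b : C) n : in_H s u -> in_H s x -> in_H s y ->
  conv u (fun k => Cplus (Cmult a (x k)) (Cmult b (y k))) n
  = Cplus (Cmult a (conv u x n)) (Cmult b (conv u y n)).
Proof.
  intros Hu Hx Hy. apply is_zsumC_unique.
  replace (conv_at u (fun k => Cplus (Cmult a (x k)) (Cmult b (y k))) n)
    with (fun k => Cplus (Cmult a (conv_at u x n k)) (Cmult b (conv_at u y n k)))
    by (apply functional_extensionality; intros k; unfold conv_at;
        apply injective_projections; simpl; ring).
  apply is_zsumC_plus; apply is_zsumC_scal_l, (is_zsumC_conv s hs); auto.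
Qed.

Lemma conv_linear_l u x y (a b : C) n : in_H s u -> in_H s x -> in_H s y ->
  conv (fun k => Cplus (Cmult a (x k)) (Cmult b (y k))) u n
  = Cplus (Cmult a (conv x u n)) (Cmult b (conv y u n)).
Proof.
  intros Hu Hx Hy. apply is_zsumC_unique.
  replace (conv_at (fun k => Cplus (Cmult a (x k)) (Cmult b (y k))) u n)
    with (fun k => Cplus (Cmult a (conv_at x u n k)) (Cmult b (conv_at y u n k)))
    by (apply functional_extensionality; intros k; unfold conv_at;
        apply injective_projections; simpl; ring).
  apply is_zsumC_plus; apply is_zsumC_scal_l, (is_zsumC_conv s hs); auto.
Qed.

Lemma H1_comb tau (a b : R) x y : H1 tau (sadd (sscal a x) (sscal b y)) =
  (fun k => Cplus (Cmult (RtoC a) (H1 tau x k)) (Cmult (RtoC b) (H1 tau y k))).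
Proof.
  apply functional_extensionality; intros k. unfold H1, sadd, sscal.
  apply injective_projections; simpl; ring.
Qed.

Lemma Hbil_linear_l tau u x y (a b : R) : in_H s u -> in_H s x -> in_H s y ->
  Hbil tau (sadd (sscal a x) (sscal b y)) u = sadd (sscal a (Hbil tau x u)) (sscal b (Hbil tau y u)).
Proof.
  intros Hu Hx Hy. apply functional_extensionality; intros n.
  unfold Hbil at 1. rewrite H1_comb.
  unfold sscal at 1, H1 at 1, dx at 1. rewrite conv_linear_l by (apply in_H_H1; auto).
  unfold sadd, sscal, Hbil, H1, dx. apply injective_projections; simpl; ring.
Qed.

Lemma Hbil_linear_r tau u x y (a b : R) : in_H s u -> in_H s x -> in_H s y ->
  Hbil tau u (sadd (sscal a x) (sscal b y)) = sadd (sscal a (Hbil tau u x)) (sscal b (Hbil tau u y)).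
Proof.
  intros Hu Hx Hy. apply functional_extensionality; intros n.
  unfold Hbil at 1. rewrite H1_comb.
  unfold sscal at 1, H1 at 1, dx at 1. rewrite conv_linear_r by (apply in_H_H1; auto).
  unfold sadd, sscal, Hbil, H1, dx. apply injective_projections; simpl; ring.
Qed.

End ConvLinear.

Lemma Htilde_in_H s (hs : 1 / 2 < s) tau w : in_H s w ->
  in_H (s - 1) (Htilde tau w) /\
  Hnorm (s - 1) (Htilde tau w) <= sqrt (alg_const s) / 2 * Hnorm s w ^ 2.
Proof.
  intros Hw. rewrite (Htilde_Hbil s hs tau w Hw).
  destruct (Hbil_in_H s hs tau w w Hw Hw) as [Hin Hle]. split; [exact Hin|].
  replace (Hnorm s w ^ 2) with (Hnorm s w * Hnorm s w) by ring.
  rewrite <- Rmult_assoc. exact Hle.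
Qed.

Lemma smooth_Htilde s (hs : 1 / 2 < s) tau : smooth_map s (s - 1) (Htilde tau).
Proof.
  apply (smooth_map_quadratic s (s - 1) (sqrt (alg_const s) / 2) (Hbil tau)).
  - pose proof (sqrt_pos (alg_const s)). lra.
  - intros u v. apply (Hbil_in_H s hs).
  - intros. apply (Hbil_linear_l s hs); auto.
  - intros. apply (Hbil_linear_r s hs); auto.
  - intros w. apply (Htilde_Hbil s hs).
Qed.

(** * Periodicity and time average *)

Lemma cexpi_add_Zperiod x z : cexpi (x + 2 * IZR z * PI) = cexpi x.
Proof.
  assert (Hper : forall y (k : nat), cexpi (y + 2 * INR k * PI) = cexpi y)
    by (intros y k; unfold cexpi; rewrite cos_period, sin_period; reflexivity).
  destruct (Z_le_gt_dec 0 z) as [H|H].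
  - rewrite <- (Z2Nat.id z), <- INR_IZR_INZ by lia. apply Hper.
  - replace z with (- Z.of_nat (Z.to_nat (- z)))%Z by lia. rewrite opp_IZR, <- INR_IZR_INZ.
    rewrite <- (Hper _ (Z.to_nat (- z))). f_equal. ring.
Qed.

Lemma H1_periodic t x : H1 (t + 2 * PI) x = H1 t x.
Proof.
  apply functional_extensionality; intros n. unfold H1. f_equal.
  replace (- IZR n ^ 3 * (t + 2 * PI)) with (- IZR n ^ 3 * t + 2 * IZR (- (n * n * n)) * PI)
    by (rewrite opp_IZR, !mult_IZR; ring).
  apply cexpi_add_Zperiod.
Qed.

Lemma Htilde_periodic tau w : Htilde (tau + 2 * PI) w = Htilde tau w.
Proof.
  unfold Htilde. rewrite H1_periodic.
  replace (- tau) with (- (tau + 2 * PI) + 2 * PI) by ring.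
  rewrite H1_periodic. reflexivity.
Qed.

Lemma is_RInt_Cmult_l (f : R -> C) a b (I c : C) :
  is_RInt (V := C_R_NormedModule) f a b I ->
  is_RInt (V := C_R_NormedModule) (fun t => Cmult c (f t)) a b (Cmult c I).
Proof.
  intros H.
  pose proof (is_RInt_fct_extend_fst (U := R_NormedModule) (V := R_NormedModule) f a b I H) as H1.
  pose proof (is_RInt_fct_extend_snd (U := R_NormedModule) (V := R_NormedModule) f a b I H) as H2.
  destruct c as [c1 c2].
  apply (is_RInt_fct_extend_pair (U := R_NormedModule) (V := R_NormedModule)).
  - pose proof (is_RInt_minus _ _ _ _ _ _ (is_RInt_scal _ _ _ c1 _ H1) (is_RInt_scal _ _ _ c2 _ H2))
      as H3.
    unfold minus, plus, opp, scal in H3; simpl in H3. unfold mult in H3; simpl in H3.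
    replace (fst (Cmult (c1, c2) I)) with (c1 * fst I + - (c2 * snd I)) by (simpl; ring).
    apply (is_RInt_ext (fun y => c1 * fst (f y) + - (c2 * snd (f y)))); [|exact H3].
    intros x _. simpl. ring.
  - pose proof (is_RInt_plus _ _ _ _ _ _ (is_RInt_scal _ _ _ c1 _ H2) (is_RInt_scal _ _ _ c2 _ H1))
      as H3.
    unfold plus, scal in H3; simpl in H3. unfold mult in H3; simpl in H3.
    replace (snd (Cmult (c1, c2) I)) with (c1 * snd I + c2 * fst I) by (simpl; ring).
    apply (is_RInt_ext (fun y => c1 * snd (f y) + c2 * fst (f y))); [|exact H3].
    intros x _. simpl. ring.
Qed.

Lemma is_RInt_eq_val {V : NormedModule R_AbsRing} (f : R -> V) a b l l' :
  is_RInt f a b l -> l = l' -> is_RInt f a b l'.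
Proof. intros H <-. exact H. Qed.

Lemma is_RInt_const_C (c : C) a b :
  is_RInt (V := C_R_NormedModule) (fun _ => c) a b (Cmult (RtoC (b - a)) c).
Proof.
  eapply is_RInt_eq_val; [apply (is_RInt_const (V := C_R_NormedModule))|].
  destruct c as [c1 c2]. unfold scal; simpl. unfold prod_scal; simpl.
  unfold scal; simpl. unfold mult; simpl. apply injective_projections; simpl; ring.
Qed.

Lemma is_RInt_cos_Zmult z : z <> 0%Z -> is_RInt (fun t => cos (IZR z * t)) 0 (2 * PI) 0.
Proof.
  intros Hz. assert (Hz' : IZR z <> 0) by (apply not_0_IZR; auto).
  eapply is_RInt_eq_val.
  - apply (is_RInt_derive (fun t => sin (IZR z * t) / IZR z)).
    + intros x _. auto_derive; auto. field. auto.
    + intros x _. apply continuous_cos_comp.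
      apply (ex_derive_continuous (K := R_AbsRing) (V := R_NormedModule)). auto_derive. auto.
  - replace (IZR z * (2 * PI)) with (0 + 2 * IZR z * PI) by ring.
    pose proof (f_equal snd (cexpi_add_Zperiod 0 z)) as E. simpl in E. rewrite E.
    rewrite Rmult_0_r, sin_0. unfold minus, plus, opp; simpl. field. auto.
Qed.

Lemma is_RInt_sin_Zmult z : z <> 0%Z -> is_RInt (fun t => sin (IZR z * t)) 0 (2 * PI) 0.
Proof.
  intros Hz. assert (Hz' : IZR z <> 0) by (apply not_0_IZR; auto).
  eapply is_RInt_eq_val.
  - apply (is_RInt_derive (fun t => - cos (IZR z * t) / IZR z)).
    + intros x _. auto_derive; auto. field. auto.
    + intros x _. apply continuous_sin_comp.
      apply (ex_derive_continuous (K := R_AbsRing) (V := R_NormedModule)). auto_derive. auto.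
  - replace (IZR z * (2 * PI)) with (0 + 2 * IZR z * PI) by ring.
    pose proof (f_equal fst (cexpi_add_Zperiod 0 z)) as E. simpl in E. rewrite E.
    rewrite Rmult_0_r. unfold minus, plus, opp; simpl. field. auto.
Qed.

Lemma is_RInt_cexpi_period (z : Z) :
  is_RInt (V := C_R_NormedModule) (fun t => cexpi (IZR z * t)) 0 (2 * PI)
    (if Z.eqb z 0 then RtoC (2 * PI) else RtoC 0).
Proof.
  destruct (Z.eqb_spec z 0) as [Ez|Ez].
  - subst. apply (is_RInt_ext (fun _ => RtoC 1)).
    { intros x _. unfold cexpi. rewrite Rmult_0_l, cos_0, sin_0. reflexivity. }
    eapply is_RInt_eq_val; [apply is_RInt_const_C|].
    apply injective_projections; simpl; ring.
  - exact (is_RInt_fct_extend_pair (U := R_NormedModule) (V := R_NormedModule)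
             (fun t => cexpi (IZR z * t)) 0 (2 * PI) 0 0
             (is_RInt_cos_Zmult z Ez) (is_RInt_sin_Zmult z Ez)).
Qed.

Lemma is_RInt_wsumC (F : Z -> R -> C) (I : Z -> C) a b m : forall k0,
  (forall k, is_RInt (V := C_R_NormedModule) (F k) a b (I k)) ->
  is_RInt (V := C_R_NormedModule) (fun t => wsumC (fun k => F k t) k0 m) a b (wsumC I k0 m).
Proof.
  induction m as [|m IH]; intros k0 H.
  - apply (is_RInt_ext (fun _ => RtoC 0)); [reflexivity|].
    eapply is_RInt_eq_val; [apply is_RInt_const_C|].
    apply injective_projections; simpl; ring.
  - apply (is_RInt_ext (fun t => Cplus (F k0 t) (wsumC (fun k => F k t) (Z.succ k0) m)));
      [reflexivity|].
    apply (is_RInt_plus (V := C_R_NormedModule)); auto.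
Qed.

Lemma Htilde_zero_mode s (hs : 1 / 2 < s) tau w : in_H s w -> Htilde tau w 0%Z = RtoC 0.
Proof.
  intros Hw. rewrite (Htilde_Hbil s hs tau w Hw). unfold Hbil, sscal, H1, dx.
  apply injective_projections; simpl; ring.
Qed.

Section TimeAverage.
Variable s : R.
Hypothesis hs : 1 / 2 < s.
Variable w : seqZ.
Hypothesis Hw : in_H s w.
Variable n : Z.

Let a := Cmult (RtoC (/ 2)) (Cmult Ci (RtoC (IZR n))).
Let c k := Cmult (w k) (w (n - k)%Z).
(* [3 n k (n - k) = n^3 - k^3 - (n - k)^3], the resonance function of KdV. *)
Let phase k := (3 * n * k * (n - k))%Z.
Let partial (M : nat) (tau : R) : C :=
  Cmult a (wsumC (fun k => Cmult (c k) (cexpi (IZR (phase k) * tau))) (- Z.of_nat M) (S (2 * M))).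

Let dominator k := / 2 * (Hs_wt s w k + Hs_wt s w (n - k)%Z).

Let conv_H1_dominated tau k : Cmod (conv_at (H1 tau w) (H1 tau w) n k) <= dominator k.
Proof.
  pose proof (conv_at_dominated s hs (H1 tau w) (H1 tau w) n k) as H.
  rewrite Hs_wt_H1 in H. exact H.
Qed.

Let dominator_bounded : zpsumR_bounded dominator (/ 2 * (Hnorm s w ^ 2 + Hnorm s w ^ 2)).
Proof. apply (conv_dominator_bounded s w w n (/ 2)); auto. lra. Qed.

Let dominator_nonneg k : 0 <= dominator k.
Proof. pose proof (Hs_wt_nonneg s w k). pose proof (Hs_wt_nonneg s w (n - k)%Z). unfold dominator. lra. Qed.

Let Htilde_mode tau : Htilde tau w n =
  Cmult (cexpi (- (IZR n ^ 3) * - tau)) (Cmult a (conv (H1 tau w) (H1 tau w) n)).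
Proof.
  rewrite (Htilde_Hbil s hs tau w Hw). unfold Hbil, sscal, H1 at 1, dx, a.
  apply injective_projections; simpl; ring.
Qed.

Let partial_eq M tau : partial M tau =
  Cmult (cexpi (- (IZR n ^ 3) * - tau)) (Cmult a (zpsum (conv_at (H1 tau w) (H1 tau w) n) M)).
Proof.
  unfold partial. rewrite zpsum_wsumC, !wsumC_scal_l.
  apply wsumC_ext. intros k. unfold conv_at, H1, c, phase.
  replace (IZR (3 * n * k * (n - k)) * tau)
    with (- (IZR n ^ 3) * - tau + (- (IZR k ^ 3) * tau + - (IZR (n - k) ^ 3) * tau))
    by (rewrite !mult_IZR, !minus_IZR; ring).
  rewrite !cexpi_add. apply injective_projections; simpl; ring.
Qed.

Lemma partial_uniform_cvg :
  filterlim partial eventually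
    (locally (T := fct_UniformSpace R C_R_CompleteNormedModule) (fun tau => Htilde tau w n)).
Proof.
  intros P [eps HP].
  assert (Hn : 0 < Cmod a + 1) by (pose proof (Cmod_ge_0 a); lra).
  destruct (zsumR_tail dominator dominator_nonneg _ dominator_bounded (eps / (Cmod a + 1)))
    as [M0 HM0]; [apply Rdiv_lt_0_compat; [apply cond_pos | exact Hn]|].
  exists M0. intros M HM. apply HP. intros tau. apply Cmod_lt_ball.
  rewrite partial_eq, Htilde_mode.
  set (L := conv (H1 tau w) (H1 tau w) n).
  set (P1 := zpsum (conv_at (H1 tau w) (H1 tau w) n) M).
  replace (Cminus (Cmult (cexpi (- (IZR n ^ 3) * - tau)) (Cmult a P1))
                  (Cmult (cexpi (- (IZR n ^ 3) * - tau)) (Cmult a L)))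
    with (Cmult (cexpi (- (IZR n ^ 3) * - tau)) (Cmult a (Copp (Cminus L P1))))
    by (apply injective_projections; simpl; ring).
  rewrite !Cmod_mult, Cmod_cexpi, Cmod_opp, Rmult_1_l.
  pose proof (zsumC_tail_le _ dominator _ (conv_H1_dominated tau) dominator_bounded L
                (is_zsumC_conv s hs _ _ n (in_H_H1 s tau w Hw) (in_H_H1 s tau w Hw)) M) as T.
  specialize (HM0 M HM). fold P1 in T.
  assert (HT : Cmod (Cminus L P1) < eps / (Cmod a + 1)) by lra.
  pose proof (Cmod_ge_0 (Cminus L P1)). pose proof (Cmod_ge_0 a).
  apply Rle_lt_trans with ((Cmod a + 1) * Cmod (Cminus L P1)); [nra|].
  apply Rmult_lt_reg_r with (/ (Cmod a + 1)); [apply Rinv_0_lt_compat; lra|].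
  replace ((Cmod a + 1) * Cmod (Cminus L P1) * / (Cmod a + 1)) with (Cmod (Cminus L P1))
    by (field; lra).
  exact HT.
Qed.

Lemma is_RInt_partial M :
  is_RInt (V := C_R_NormedModule) (partial M) 0 (2 * PI)
    (Cmult a (wsumC (fun k => Cmult (c k) (if Z.eqb (phase k) 0 then RtoC (2 * PI) else RtoC 0))
                    (- Z.of_nat M) (S (2 * M)))).
Proof.
  apply is_RInt_Cmult_l.
  apply (is_RInt_wsumC (fun k t => Cmult (c k) (cexpi (IZR (phase k) * t)))).
  intros k. apply is_RInt_Cmult_l, is_RInt_cexpi_period.
Qed.

Lemma partial_integral_resonant M : n <> 0%Z -> (Z.to_nat (Z.abs n) <= M)%nat ->
  wsumC (fun k => Cmult (c k) (if Z.eqb (phase k) 0 then RtoC (2 * PI) else RtoC 0))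
        (- Z.of_nat M) (S (2 * M))
  = Cmult (RtoC (2 * PI)) (Cplus (c 0%Z) (c n)).
Proof.
  intros Hn HM. rewrite (wsumC_pair _ 0%Z n); auto; try lia.
  - replace (phase 0%Z) with 0%Z by (unfold phase; ring).
    replace (phase n) with 0%Z by (unfold phase; ring).
    simpl. apply injective_projections; simpl; ring.
  - intros k H0 Hk. replace (Z.eqb (phase k) 0) with false.
    + apply injective_projections; simpl; ring.
    + symmetry. apply Z.eqb_neq. unfold phase. intros E.
      repeat (apply Z.mul_eq_0 in E; destruct E as [E|E]); lia.
Qed.

Lemma Htilde_average_nonzero_mode : n <> 0%Z ->
  ex_RInt (V := C_R_NormedModule) (fun tau => Htilde tau w n) 0 (2 * PI) /\
  Cmult (RtoC (/ (2 * PI))) (RInt (V := C_R_CompleteNormedModule) (fun tau => Htilde tau w n) 0 (2 * PI))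
  = Cmult (w 0%Z) (Cmult (Cmult Ci (RtoC (IZR n))) (w n)).
Proof.
  intros Hn.
  set (V0 := Cmult a (Cmult (RtoC (2 * PI)) (Cplus (c 0%Z) (c n)))).
  destruct (filterlim_RInt (V := C_R_CompleteNormedModule) partial 0 (2 * PI) eventually _
              (fun tau => Htilde tau w n) _ is_RInt_partial partial_uniform_cvg) as [I [HI1 HI2]].
  assert (EI : I = V0).
  { apply (filterlim_locally_unique (K := R_AbsRing) (V := C_R_NormedModule) (F := eventually)
             _ _ _ HI1).
    intros P [eps HP]. exists (Z.to_nat (Z.abs n)). intros M HM.
    rewrite partial_integral_resonant by auto. apply HP, ball_center. }
  subst I. split; [exists V0; exact HI2|].
  rewrite (is_RInt_unique (V := C_R_CompleteNormedModule) _ _ _ _ HI2).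
  unfold V0, a, c. replace (n - 0)%Z with n by lia. replace (n - n)%Z with 0%Z by lia.
  pose proof PI_RGT_0. apply injective_projections; simpl; field; lra.
Qed.

End TimeAverage.

Lemma Htilde_average_zero_mode s (hs : 1 / 2 < s) w : in_H s w ->
  ex_RInt (V := C_R_NormedModule) (fun tau => Htilde tau w 0%Z) 0 (2 * PI) /\
  Cmult (RtoC (/ (2 * PI))) (RInt (V := C_R_CompleteNormedModule) (fun tau => Htilde tau w 0%Z) 0 (2 * PI))
  = RtoC 0.
Proof.
  intros Hw.
  assert (HI : is_RInt (V := C_R_NormedModule) (fun tau => Htilde tau w 0%Z) 0 (2 * PI) (RtoC 0)).
  { apply (is_RInt_ext (fun _ => RtoC 0)); [intros; symmetry; apply (Htilde_zero_mode s hs), Hw|].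
    eapply is_RInt_eq_val; [apply is_RInt_const_C | apply injective_projections; simpl; ring]. }
  split; [exists (RtoC 0); exact HI|].
  rewrite (is_RInt_unique (V := C_R_CompleteNormedModule) _ _ _ _ HI).
  apply injective_projections; simpl; ring.
Qed.

Theorem lemma2p7 (s : R) (hs : 1 / 2 < s) :
  exists Cs : R,
    (* well defined, H^s -> H^{s-1}, with tau-independent bound *)
    (forall (tau : R) (w : seqZ), in_H s w ->
       (forall n : Z, exists l : C,
          is_zsumC (conv_at (H1 tau w) (dx (H1 tau w)) n) l) /\
       in_H (s - 1) (Htilde tau w) /\
       Hnorm (s - 1) (Htilde tau w) <= Cs * Hnorm s w ^ 2) /\
    (* smooth *)
    (forall tau : R, smooth_map s (s - 1) (Htilde tau)) /\
    (* 2pi-periodic in tau *)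
    (forall (tau : R) (w : seqZ), in_H s w ->
       Htilde (tau + 2 * PI) w = Htilde tau w) /\
    (* time average *)
    (forall w : seqZ, in_H s w ->
       exists S : C,
         is_zsumC (fun m => Cmult (Cmult (Cmult Ci (RtoC (IZR m))) (w m)) (w (- m)%Z)) S /\
         forall n : Z,
           ex_RInt (V := C_R_NormedModule) (fun tau => Htilde tau w n) 0 (2 * PI) /\
           Cmult (RtoC (/ (2 * PI))) (RInt (V := C_R_CompleteNormedModule) (fun tau => Htilde tau w n) 0 (2 * PI))
           = Cplus (Cmult (w 0%Z) (Cmult (Cmult Ci (RtoC (IZR n))) (w n)))
                   (if Z.eqb n 0 then S else RtoC 0)).
Proof.
  exists (sqrt (alg_const s) / 2).
  split; [|split; [|split]].
  - intros tau w Hw. split; [intros n; eexists; apply (is_zsumC_conv_dx s hs), in_H_H1, Hw|].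
    apply (Htilde_in_H s hs), Hw.
  - intros tau. apply smooth_Htilde, hs.
  - intros tau w _. apply Htilde_periodic.
  - intros w Hw. exists (RtoC 0). split.
    + apply is_zsumC_odd. intros m. rewrite Z.opp_involutive, opp_IZR.
      apply injective_projections; simpl; ring.
    + intros n. destruct (Z.eqb_spec n 0) as [->|Hn].
      * destruct (Htilde_average_zero_mode s hs w Hw) as [Hex Havg]. split; [exact Hex|].
        rewrite Havg. apply injective_projections; simpl; ring.
      * destruct (Htilde_average_nonzero_mode s hs w Hw n Hn) as [Hex Havg]. split; [exact Hex|].
        rewrite Havg. apply injective_projections; simpl; ring.
Qed.
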